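(* Let $M>2$, $p_M=\frac{M+2}{M-2}$, $m\ge2$, and for $p\in(1,p_M)$ let $v_p$ be the unique solution in $H^1_{0,M}$ of $-(t^{M-1}v')'=t^{M-1}|v|^{p-1}v$ on $(0,1)$, $v'(0)=0$, $v(1)=0$, with exactly $m$ nodal zones and $v_p(0)>0$. Fix $i\in\{1,\dots,m-1\}$ and let $w_{i,p}(r)=t_{i,p}^{2/(p-1)}v_p(t_{i,p}r)$ for $0\le r\le 1/t_{i,p}$. Assume that for a sequence $p_n\to p_M$, \[ \frac{s_{i-1,p_n}}{t_{i,p_n}}\to0\quad\text{and}\quad t_{i,p_n}\widetilde{\mathcal M}_{i-1,p_n}\to+\infty . \] Then $w_{i,p_n}\to0$ uniformly on $[1-\delta,1]$ for every $0<\delta<1$.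
   Context: $H^1_{0,M}$: measurable $v$ on $(0,1)$ with $\int_0^1t^{M-1}(v^2+|v'|^2)<\infty$, $v(1)=0$. $0=t_{0,p}<t_{1,p}<\dots<t_{m,p}=1$ are $0$ and the zeros of $v_p$; $s_{k,p}$ is the unique critical point of $v_p$ in $(t_{k,p},t_{k+1,p})$ with $s_{0,p}=0$; $\mathcal M_{k,p}=|v_p(s_{k,p})|$, $\widetilde{\mathcal M}_{k,p}=\mathcal M_{k,p}^{(p-1)/2}$. *)

From Stdlib Require Import Reals Lra.
From Coquelicot Require Import Coquelicot.
Open Scope R_scope.

Definition pM (M : R) : R := (M + 2) / (M - 2).

Definition spow (p x : R) : R := Rpower (Rabs x) (p - 1) * x.

(* v is a (classical, hence H^1_{0,M}) solution of
   -(t^{M-1} v')' = t^{M-1} |v|^{p-1} v on (0,1), v'(0)=0, v(1)=0,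
   with v continuous on [0,1]. *)
Definition radial_sol (M p : R) (v : R -> R) : Prop :=
  exists dv : R -> R,
    (forall t, 0 < t < 1 -> is_derive v t (dv t)) /\
    (forall t, 0 < t < 1 ->
       is_derive (fun s => Rpower s (M - 1) * dv s) t
                 (- (Rpower t (M - 1) * spow p (v t)))) /\
    filterlim dv (at_right 0) (locally 0) /\
    filterlim v (at_right 0) (locally (v 0)) /\
    filterlim v (at_left 1) (locally (v 1)) /\
    v 1 = 0.

(* t 0 = 0 < t 1 < ... < t m = 1 are 0 and the zeros of v in (0,1];
   in particular v has exactly m nodal zones. *)
Definition nodal_zeros (m : nat) (v : R -> R) (t : nat -> R) : Prop :=
  t 0%nat = 0 /\ t m = 1 /\
  (forall k, (k < m)%nat -> t k < t (S k)) /\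
  (forall x, 0 < x <= 1 ->
     (v x = 0 <-> exists k, (1 <= k <= m)%nat /\ x = t k)).

Definition crit_points (m : nat) (v : R -> R) (t s : nat -> R) : Prop :=
  s 0%nat = 0 /\
  forall k, (1 <= k)%nat -> (k < m)%nat ->
    t k < s k < t (S k) /\ is_derive v (s k) 0.

(* In the Emden-Fowler variables [s = ln r], [Y(s) = +-r^al v(r)], [Z(s) = -+r^(al+1) v'(r)]
   with [al = 2/(p-1)], the radial equation becomes the autonomous system
   [Y' = al Y - Z], [Z' = |Y|^(p-1) Y - ga Z], [ga = M - 2 - al], whose energy
   [H = (al Y - Z)^2/2 - al ga Y^2/2 + |Y|^(p+1)/(p+1)] satisfies [H' = (al - ga) Y'^2 >= 0],
   and [al - ga -> 0] as [p -> pM M].  On the i-th nodal zone [s] runs from [ln s_(i-1)],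
   where [Z = 0] (or from [-oo], where [H -> 0], when [i = 1]), to [ln t_i], where [Y = 0],
   and [w_i(r) = r^(-al) Y(ln t_i + ln r)].  Since [s_(i-1)/t_i -> 0] the zone is long in [s].
   Time spent where [Y] is small is at most a multiple of [1/sqrt H], and time where [Y] is
   large is bounded by the rotation of a Pruefer angle, so a long zone forces [H] to be small
   at its start.  Near-conservation of [H] keeps it small at [ln t_i], and a Gronwall estimate
   backwards from [Y(ln t_i) = 0] makes [Y], hence [w_i], uniformly small on [[1 - delta, 1]]. *)

From Stdlib Require Import Reals Lra Lia Classical.
From Coquelicot Require Import Coquelicot.
Open Scope R_scope.

Lemma Rpower_pos x y : 0 < Rpower x y.
Proof. apply exp_pos. Qed.

Lemma exp_le a b : a <= b -> exp a <= exp b.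
Proof. intros [H|<-]; [left; apply exp_increasing|]; lra. Qed.

Lemma Rpower_le_1 y c : 0 < y <= 1 -> 0 <= c -> Rpower y c <= 1.
Proof.
  intros Hy Hc. unfold Rpower. rewrite <- exp_0. apply exp_le.
  assert (ln y <= 0) by (rewrite <- ln_1; apply ln_le; lra). nra.
Qed.

(* [ln 0] is the junk value [0]. *)
Lemma Rpower_0_l c : Rpower 0 c = 1.
Proof.
  unfold Rpower. replace (ln 0) with 0; [rewrite Rmult_0_r; apply exp_0|].
  unfold ln. destruct (Rlt_dec 0 0); [exfalso; lra|reflexivity].
Qed.

Lemma Rpower_ge_1 x c : 1 <= x -> 0 <= c -> 1 <= Rpower x c.
Proof. intros. rewrite <- (Rpower_O x) by lra. apply Rle_Rpower; lra. Qed.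

Lemma Rpower_succ x c : 0 < x -> Rpower x c * x = Rpower x (c + 1).
Proof. intros. rewrite Rpower_plus, Rpower_1; auto. Qed.

Lemma Rpower_pred x c : 0 < x -> Rpower x (c - 1) = Rpower x c / x.
Proof.
  intros. replace (Rpower x c) with (Rpower x (c - 1) * x); [field; lra|].
  rewrite Rpower_succ by auto. f_equal; ring.
Qed.

Lemma Rpower_half_sq x c : Rpower x (c / 2) * Rpower x (c / 2) = Rpower x c.
Proof. rewrite <- Rpower_plus. f_equal; field. Qed.

Lemma sign_abs sg : sg * sg = 1 -> Rabs sg = 1.
Proof.
  intros Hs. destruct (Rle_or_lt 0 sg).
  - rewrite Rabs_right; nra.
  - rewrite Rabs_left; nra.
Qed.

Lemma le_of_sq_le (a b : R) : 0 <= b -> a * a <= b * b -> a <= b.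
Proof. intros. nra. Qed.

Lemma is_derive_Rpower (c x : R) : 0 < x -> is_derive (fun y => Rpower y c) x (c * Rpower x (c - 1)).
Proof. intros. apply is_derive_Reals, derivable_pt_lim_power; auto. Qed.

Lemma is_derive_continuity_pt (f : R -> R) (x l : R) : is_derive f x l -> continuity_pt f x.
Proof. intros H. apply derivable_continuous_pt. exists l. apply is_derive_Reals; auto. Qed.

Lemma diff_le_of_derive_le (f df : R -> R) a b K : a <= b ->
  (forall x, a <= x <= b -> is_derive f x (df x)) ->
  (forall x, a <= x <= b -> df x <= K) -> f b - f a <= K * (b - a).
Proof.
  intros [Hab|<-] Hd Hk; [|lra].
  destruct (MVT_cor3 f df a b Hab) as [c [H1 [H2 ->]]].
  - intros x H1 H2. apply is_derive_Reals, Hd; lra.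
  - assert (df c <= K) by (apply Hk; lra). nra.
Qed.

Lemma diff_ge_of_derive_ge (f df : R -> R) a b K : a <= b ->
  (forall x, a <= x <= b -> is_derive f x (df x)) ->
  (forall x, a <= x <= b -> K <= df x) -> K * (b - a) <= f b - f a.
Proof.
  intros [Hab|<-] Hd Hk; [|lra].
  destruct (MVT_cor3 f df a b Hab) as [c [H1 [H2 ->]]].
  - intros x H1 H2. apply is_derive_Reals, Hd; lra.
  - assert (K <= df c) by (apply Hk; lra). nra.
Qed.

Lemma lt_of_derive_pos (f df : R -> R) a b : a < b ->
  (forall x, a <= x <= b -> is_derive f x (df x)) ->
  (forall x, a < x < b -> 0 < df x) -> f a < f b.
Proof.
  intros Hab Hd Hk.
  destruct (MVT_cor2 f df a b Hab) as [c [Hc Hc']].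
  - intros x Hx. apply is_derive_Reals, Hd, Hx.
  - assert (0 < df c) by (apply Hk; lra). nra.
Qed.

Lemma is_derive_pos_sign (f : R -> R) (c l : R) : is_derive f c l -> 0 < l ->
  exists d, 0 < d /\ (forall t, c - d < t < c -> f t < f c) /\
                     (forall t, c < t < c + d -> f c < f t).
Proof.
  intros Hd Hl. apply is_derive_Reals in Hd.
  destruct (Hd (l / 2) ltac:(lra)) as [d Hdd].
  assert (quot : forall t, t <> c -> Rabs (t - c) < d -> 0 < (f t - f c) / (t - c)).
  { intros t Htc Ht. specialize (Hdd (t - c) ltac:(lra) Ht).
    replace (c + (t - c)) with t in Hdd by ring.
    apply Rabs_def2 in Hdd. lra. }
  exists d. split; [apply cond_pos|]. split; intros t Ht.
  - assert (Hq := quot t ltac:(lra) ltac:(rewrite Rabs_left; lra)).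
    assert (f t - f c = (f t - f c) / (t - c) * (t - c)) by (field; lra). nra.
  - assert (Hq := quot t ltac:(lra) ltac:(rewrite Rabs_right; lra)).
    assert (f t - f c = (f t - f c) / (t - c) * (t - c)) by (field; lra). nra.
Qed.

Lemma continuity_pt_pos_nbhd (f : R -> R) (c : R) : continuity_pt f c -> 0 < f c ->
  exists d, 0 < d /\ forall t, Rabs (t - c) < d -> 0 < f t.
Proof.
  intros Hc Hpos. destruct (proj1 (continuity_pt_locally f c) Hc (mkposreal _ Hpos)) as [d Hd].
  exists d. split; [apply cond_pos|]. intros t Ht.
  assert (H := Hd t Ht). simpl in H. apply Rabs_def2 in H. lra.
Qed.

Section ZeroCrossing.
Variables (f df : R -> R) (a b : R).
Hypothesis Hd : forall x, a <= x <= b -> is_derive f x (df x).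
Hypothesis Hzero : forall x, a <= x <= b -> f x = 0 -> 0 < df x.

Lemma pos_propagates_right x y : a <= x -> x < y -> y <= b -> 0 < f x -> 0 < f y.
Proof.
  intros Hax Hxy Hyb Hfx.
  destruct (Rlt_or_le 0 (f y)) as [Hy|Hy]; auto. exfalso.
  set (E := fun z => x <= z <= y /\ forall t, x <= t <= z -> 0 < f t).
  assert (Ex : E x) by (split; [lra|intros t Ht; replace t with x by lra; auto]).
  destruct (completeness E) as [c [Hub Hlub]].
  { exists y. intros z [Hz _]. lra. }
  { exists x. exact Ex. }
  assert (Hxc : x <= c) by (apply Hub, Ex).
  assert (Hcy : c <= y) by (apply Hlub; intros z [Hz _]; lra).
  assert (below : forall t, x <= t < c -> 0 < f t).
  { intros t Ht. destruct (classic (exists z, E z /\ t < z)) as [[z [[_ Hz] Htz]]|Hn].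
    - apply Hz. lra.
    - assert (c <= t); [|lra]. apply Hlub. intros z Ez.
      destruct (Rle_or_lt z t); auto. exfalso. apply Hn. exists z. auto. }
  assert (Hcc : continuity_pt f c) by (apply (is_derive_continuity_pt f c (df c)), Hd; lra).
  destruct (Rtotal_order (f c) 0) as [Hneg|[Hzc|Hpos]].
  - destruct (continuity_pt_pos_nbhd (fun t => - f t) c (continuity_pt_opp _ _ Hcc))
      as [d [Hd0 Hnear]]; [lra|].
    assert (Hxc' : x < c) by (destruct (Req_dec x c); [subst; lra|lra]).
    set (t := Rmax x (c - d / 2)).
    assert (x <= t /\ c - d / 2 <= t) as [] by (split; [apply Rmax_l|apply Rmax_r]).
    assert (t < c) by (apply Rmax_lub_lt; lra).
    assert (0 < f t) by (apply below; lra).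
    assert (0 < - f t) by (apply Hnear; rewrite Rabs_left; lra). lra.
  - destruct (is_derive_pos_sign f c (df c) (Hd c ltac:(lra)) (Hzero c ltac:(lra) Hzc))
      as [d [Hd0 [Hleft _]]].
    assert (Hxc' : x < c) by (destruct (Req_dec x c); [subst; lra|lra]).
    set (t := Rmax x (c - d / 2)).
    assert (x <= t /\ c - d / 2 <= t) as [] by (split; [apply Rmax_l|apply Rmax_r]).
    assert (t < c) by (apply Rmax_lub_lt; lra).
    assert (0 < f t) by (apply below; lra).
    assert (f t < f c) by (apply Hleft; lra). lra.
  - destruct (continuity_pt_pos_nbhd f c Hcc Hpos) as [d [Hd0 Hnear]].
    assert (Hcy' : c < y) by (destruct (Req_dec c y); [subst; lra|lra]).
    set (z := Rmin (c + d / 2) y).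
    assert (z <= c + d / 2 /\ z <= y) as [] by (split; [apply Rmin_l|apply Rmin_r]).
    assert (c < z) by (apply Rmin_glb_lt; lra).
    assert (E z); [|assert (z <= c) by (apply Hub; auto); lra].
    split; [lra|]. intros t Ht. destruct (Rlt_or_le t c); [apply below; lra|].
    apply Hnear. rewrite Rabs_right; lra.
Qed.

Lemma zero_crossing_upward x y : a <= x -> x < y -> y <= b -> 0 <= f x -> 0 < f y.
Proof.
  intros Hax Hxy Hyb [Hfx|Hfx]; [exact (pos_propagates_right x y Hax Hxy Hyb Hfx)|].
  destruct (is_derive_pos_sign f x (df x) (Hd x ltac:(lra)) (Hzero x ltac:(lra) (eq_sym Hfx)))
    as [d [Hd0 [_ Hright]]].
  set (x' := x + Rmin d (y - x) / 2).
  assert (0 < Rmin d (y - x) <= d /\ Rmin d (y - x) <= y - x) as [[]]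
    by (split; [split; [apply Rmin_pos; lra|apply Rmin_l]|apply Rmin_r]).
  apply (pos_propagates_right x' y); unfold x'; try lra.
  rewrite Hfx. apply Hright. lra.
Qed.

End ZeroCrossing.

Lemma filterlim_at_right_eps (f : R -> R) (x l : R) : filterlim f (at_right x) (locally l) ->
  forall eps, 0 < eps -> exists d, 0 < d /\ forall y, x < y < x + d -> Rabs (f y - l) < eps.
Proof.
  intros Hf eps He. destruct (Hf _ (locally_ball l (mkposreal eps He))) as [d Hd].
  exists d. split; [apply cond_pos|]. intros y Hy. apply (Hd y); [|lra].
  unfold ball; simpl; unfold AbsRing_ball, abs, minus, plus, opp; simpl.
  rewrite Rabs_right; lra.
Qed.

Lemma continuous_nonzero_sign (v : R -> R) (lo hi : R) :
  (forall x, lo < x < hi -> continuity_pt v x) -> (forall x, lo < x < hi -> v x <> 0) ->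
  lo < hi -> exists sg, sg * sg = 1 /\ forall x, lo < x < hi -> 0 < sg * v x.
Proof.
  intros Hc Hnz Hlh.
  set (c := (lo + hi) / 2).
  assert (Hc1 : lo < c < hi) by (unfold c; lra).
  assert (no_sign_change : forall x y, lo < x -> x < y -> y < hi -> 0 < v x * v y).
  { intros x y Hx Hxy Hy.
    destruct (Rtotal_order (v x * v y) 0) as [Hn|[Hz|Hp]]; auto; exfalso.
    - assert (Hcont : forall z, x <= z <= y -> continuity_pt v z) by (intros; apply Hc; lra).
      destruct (Rlt_or_le (v x) 0) as [Hvx|Hvx].
      + destruct (Ranalysis5.IVT_interv v x y Hcont Hxy Hvx ltac:(nra)) as [z [Hz1 Hz2]].
        apply (Hnz z); [lra|auto].
      + destruct (Ranalysis5.IVT_interv (fun z => - v z) x y) as [z [Hz1 Hz2]]; auto.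
        * intros z Hz. apply continuity_pt_opp, Hcont, Hz.
        * assert (v x <> 0) by (apply Hnz; lra). lra.
        * nra.
        * apply (Hnz z); lra.
    - apply Rmult_integral in Hz as [Hz|Hz]; [apply (Hnz x)|apply (Hnz y)]; auto; lra. }
  assert (same_as_c : forall x, lo < x < hi -> 0 < v x * v c).
  { intros x Hx. destruct (Rtotal_order x c) as [Hxc|[->|Hxc]].
    - apply no_sign_change; lra.
    - assert (v c <> 0) by (apply Hnz; auto). nra.
    - rewrite Rmult_comm. apply no_sign_change; lra. }
  destruct (Rlt_or_le 0 (v c)) as [Hvc|Hvc].
  - exists 1. split; [ring|]. intros x Hx. specialize (same_as_c x Hx). nra.
  - exists (-1). split; [ring|]. intros x Hx. specialize (same_as_c x Hx).
    assert (v c <> 0) by (apply Hnz; auto). nra.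
Qed.

Lemma nodal_zeros_le m v (t : nat -> R) : nodal_zeros m v t ->
  forall j k, (j <= k <= m)%nat -> t j <= t k.
Proof.
  intros [_ [_ [Hinc _]]] j k [Hjk Hkm]. induction k as [|k IH].
  - replace j with 0%nat by lia. lra.
  - destruct (Nat.eq_dec j (S k)) as [->|Hj]; [lra|].
    apply Rle_trans with (t k); [apply IH; lia|left; apply Hinc; lia].
Qed.

Lemma nodal_zeros_lt m v (t : nat -> R) : nodal_zeros m v t ->
  forall j k, (j < k <= m)%nat -> t j < t k.
Proof.
  intros Hnod j k [Hjk Hkm]. destruct k as [|k]; [lia|].
  apply Rle_lt_trans with (t k); [apply (nodal_zeros_le m v); [auto|lia]|].
  apply Hnod; lia.
Qed.

Lemma nodal_zone m i v (t : nat -> R) : (1 <= i <= m - 1)%nat -> nodal_zeros m v t ->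
  0 <= t (i - 1)%nat < t i /\ t i < 1 /\ v (t i) = 0 /\
  (forall x, t (i - 1)%nat < x < t i -> v x <> 0).
Proof.
  intros Hi Hnod. pose proof Hnod as [Ht0 [Htm [_ Hz]]].
  assert (Hlo : t 0%nat <= t (i - 1)%nat) by (apply (nodal_zeros_le m v); auto; lia).
  assert (Hzone : t (i - 1)%nat < t i) by (apply (nodal_zeros_lt m v); auto; lia).
  assert (Hlt1 : t i < t m) by (apply (nodal_zeros_lt m v); auto; lia).
  split; [lra|]. split; [lra|]. split.
  - apply Hz; [lra|]. exists i. split; [lia|auto].
  - intros x Hx Hv. apply Hz in Hv as [k [Hk ->]]; [|lra].
    destruct (Compare_dec.le_lt_dec k (i - 1)).
    + assert (t k <= t (i - 1)%nat) by (apply (nodal_zeros_le m v); auto; lia). lra.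
    + assert (t i <= t k) by (apply (nodal_zeros_le m v); auto; lia). lra.
Qed.

Lemma nonneg_of_mono_vanishing (f : R -> R) b :
  (forall x y, x <= y -> y <= b -> f x <= f y) ->
  (forall c, 0 < c -> exists X, forall x, x <= X -> Rabs (f x) <= c) ->
  forall s, s <= b -> 0 <= f s.
Proof.
  intros Hmono Hlim s Hs. destruct (Rle_or_lt 0 (f s)) as [|Hneg]; [auto|exfalso].
  destruct (Hlim (- f s / 2) ltac:(lra)) as [X HX].
  set (x := Rmin X (s - 1)).
  assert (x <= X /\ x <= s - 1) as [] by (split; [apply Rmin_l|apply Rmin_r]).
  assert (Hx := HX x ltac:(lra)). apply Rabs_le_between in Hx.
  assert (f x <= f s) by (apply Hmono; lra). lra.
Qed.

Lemma is_derive_eq_val (f : R -> R) (x a b : R) : is_derive f x a -> a = b -> is_derive f x b.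
Proof. intros H <-; exact H. Qed.

Ltac simpl_R_ops := unfold minus, scal, plus, opp, mult, one, zero; simpl;
                   unfold plus, opp, mult, one, zero; simpl.

Definition potential (p x : R) : R := Rpower (Rabs x) (p - 1) * x * x / (p + 1).

Lemma spow_pos_eq p x : 0 < x -> spow p x = Rpower x (p - 1) * x.
Proof. intros. unfold spow. rewrite Rabs_right by lra. reflexivity. Qed.

Lemma potential_pos_eq p x : 0 < x -> potential p x = Rpower x (p - 1) * x * x / (p + 1).
Proof. intros. unfold potential. rewrite Rabs_right by lra. reflexivity. Qed.

Lemma potential_nonneg p x : 1 < p -> 0 <= potential p x.
Proof.
  intros Hp. unfold potential. apply Rdiv_le_0_compat; [|lra].
  rewrite Rmult_assoc. apply Rmult_le_pos; [left; apply Rpower_pos|apply Rle_0_sqr].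
Qed.

Lemma potential_le_sq p x : 1 < p -> Rabs x <= 1 -> potential p x <= x * x.
Proof.
  intros Hp Hx. unfold potential.
  assert (Hr : Rpower (Rabs x) (p - 1) <= 1).
  { destruct (Req_dec x 0) as [->|Hx0]; [rewrite Rabs_R0, Rpower_0_l; lra|].
    apply Rpower_le_1; [split; [apply Rabs_pos_lt|]|]; auto; lra. }
  assert (0 <= x * x) by apply Rle_0_sqr.
  assert (Rpower (Rabs x) (p - 1) * x * x <= x * x) by nra.
  assert (0 <= Rpower (Rabs x) (p - 1) * x * x)
    by (rewrite Rmult_assoc; apply Rmult_le_pos; [left; apply Rpower_pos|auto]).
  apply Rle_trans with (Rpower (Rabs x) (p - 1) * x * x); [|auto].
  unfold Rdiv. rewrite <- (Rmult_1_r (_ * x * x)) at 2.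
  apply Rmult_le_compat_l; [auto|]. rewrite <- Rinv_1. apply Rinv_le_contravar; lra.
Qed.

Lemma potential_le_quadratic p be y : 1 < p -> 0 < y ->
  Rpower y (p - 1) <= (p + 1) * be / 2 -> potential p y <= be * (y * y) / 2.
Proof.
  intros Hp Hy Hr. rewrite potential_pos_eq by auto.
  assert (0 <= y * y) by apply Rle_0_sqr.
  apply (Rmult_le_reg_r (p + 1)); [lra|].
  replace (Rpower y (p - 1) * y * y / (p + 1) * (p + 1)) with (Rpower y (p - 1) * (y * y))
    by (field; lra).
  replace (be * (y * y) / 2 * (p + 1)) with ((p + 1) * be / 2 * (y * y)) by field.
  apply Rmult_le_compat_r; auto.
Qed.

Lemma is_derive_potential (p x : R) : 1 < p -> is_derive (potential p) x (spow p x).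
Proof.
  intros Hp.
  assert (D : is_derive (fun y : R => Rpower (Rabs y) (p - 1) * y * y) x ((p + 1) * spow p x)).
  { unfold spow. destruct (Rtotal_order x 0) as [Hn|[->|Hpos]].
    - apply is_derive_ext_loc with (f := fun y => Rpower (- y) (p + 1)).
      + apply locally_interval with (a := m_infty) (b := Finite 0); simpl; auto.
        intros y _ Hy. rewrite Rabs_left by lra.
        replace (Rpower (- y) (p - 1) * y * y) with (Rpower (- y) (p - 1) * (- y) * (- y)) by ring.
        rewrite !Rpower_succ by lra. f_equal; ring.
      + eapply is_derive_eq_val.
        { apply (is_derive_comp (fun y => Rpower y (p + 1)) Ropp).
          - apply is_derive_Rpower. lra.
          - exact (is_derive_opp (fun y : R => y) x 1 (is_derive_id x)). }
        rewrite Rabs_left by lra. replace (p + 1 - 1) with (p - 1 + 1) by ring.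
        rewrite <- Rpower_succ by lra. change (scal (opp 1) ?a) with (- 1 * a); ring.
    - apply is_derive_Reals. intros eps Heps.
      exists (mkposreal (Rmin 1 eps) ltac:(apply Rmin_pos; lra)). simpl.
      intros h Hh0 Hh. rewrite Rplus_0_l, Rabs_R0, !Rmult_0_r.
      replace ((Rpower (Rabs h) (p - 1) * h * h - 0) / h - 0) with (Rpower (Rabs h) (p - 1) * h)
        by (field; auto).
      assert (Rmin 1 eps <= 1 /\ Rmin 1 eps <= eps) as [] by (split; [apply Rmin_l|apply Rmin_r]).
      assert (Hb : Rpower (Rabs h) (p - 1) <= 1)
        by (apply Rpower_le_1; [split; [apply Rabs_pos_lt; auto|]|]; lra).
      rewrite Rabs_mult, (Rabs_right (Rpower _ _)) by (left; apply Rpower_pos).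
      assert (0 <= Rabs h) by apply Rabs_pos. assert (0 < Rpower (Rabs h) (p - 1)) by apply Rpower_pos.
      nra.
    - apply is_derive_ext_loc with (f := fun y => Rpower y (p + 1)).
      + apply locally_interval with (a := Finite 0) (b := p_infty); simpl; auto.
        intros y Hy _. rewrite Rabs_right by lra. rewrite !Rpower_succ by lra. f_equal; ring.
      + eapply is_derive_eq_val; [apply is_derive_Rpower; lra|].
        rewrite Rabs_right by lra. replace (p + 1 - 1) with (p - 1 + 1) by ring.
        rewrite <- Rpower_succ by lra. ring. }
  eapply is_derive_eq_val.
  - apply (is_derive_ext (fun y : R => / (p + 1) * (Rpower (Rabs y) (p - 1) * y * y)) (potential p)).
    + intros y. unfold potential, Rdiv. apply Rmult_comm.
    + apply is_derive_scal, D.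
  - field. lra.
Qed.

Lemma potential_growth_bound p c E B y : 1 < p -> 0 <= c -> E <= 1 -> 1 <= B ->
  (p + 1) * (1 + c) < Rpower B (p - 1) -> potential p y - c * (y * y) <= E -> y <= B.
Proof.
  intros Hp Hc HE HB HBp Hy. destruct (Rle_or_lt y B) as [|HyB]; [auto|exfalso].
  rewrite potential_pos_eq in Hy by lra.
  assert (HR0 : Rpower B (p - 1) <= Rpower y (p - 1)) by (apply Rle_Rpower_l; lra).
  assert (Hyy : 1 <= y * y) by nra.
  assert (Rpower y (p - 1) * (y * y) <= (p + 1) * (1 + c) * (y * y)); [|nra].
  replace (Rpower y (p - 1) * (y * y)) with ((p + 1) * (Rpower y (p - 1) * y * y / (p + 1)))
    by (field; lra).
  rewrite (Rmult_assoc (p + 1)). apply Rmult_le_compat_l; nra.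
Qed.

Lemma riccati_rate_bound p be u T dd ka : 1 < p -> 0 < dd -> dd <= u ->
  dd * dd = (p + 1) * be / 2 -> 0 <= ka -> ka <= dd * ((p - 1) / (p + 1)) ->
  ka * T - u + be / u - (p + 1) / 2 * u * (T * T)
    <= - (dd * ((p - 1) / (p + 1)) / 2) * (1 + T * T).
Proof.
  intros Hp Hd Hu Hdd Hka0 Hka1.
  set (cc := (p - 1) / (p + 1)) in *.
  assert (Hcc0 : 0 < cc) by (unfold cc; apply Rdiv_lt_0_compat; lra).
  assert (Hcc1 : cc < 1) by (unfold cc; apply (Rmult_lt_reg_r (p + 1)); [lra|]; field_simplify; lra).
  assert (Hbe : be / u <= 2 * u / (p + 1)).
  { replace (be / u) with (2 * (dd * dd) / (p + 1) / u) by (rewrite Hdd; field; lra).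
    apply (Rmult_le_reg_r u); [lra|]. apply (Rmult_le_reg_r (p + 1)); [lra|].
    replace (2 * (dd * dd) / (p + 1) / u * u * (p + 1)) with (2 * (dd * dd)) by (field; lra).
    replace (2 * u / (p + 1) * u * (p + 1)) with (2 * (u * u)) by (field; lra). nra. }
  assert (Hlin : - u + be / u <= - dd * cc).
  { assert (- u + 2 * u / (p + 1) = - u * cc) by (unfold cc; field; lra). nra. }
  assert (Hquad : dd * cc * (T * T) <= (p + 1) / 2 * u * (T * T)).
  { apply Rmult_le_compat_r; [apply Rle_0_sqr|]. nra. }
  assert (Hcross : ka * T <= dd * cc * (1 + T * T) / 2).
  { assert (T <= (1 + T * T) / 2) by (assert (0 <= (T - 1) * (T - 1)) by apply Rle_0_sqr; lra).
    assert (0 <= T * T) by apply Rle_0_sqr.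
    destruct (Rle_or_lt 0 T); nra. }
  lra.
Qed.

(* A Pruefer-type angle: [tan] of it compares [Y' = al Y - Z] with [Y^((p+1)/2)]. *)
Definition ef_angle (p al : R) (Y Z : R -> R) (t : R) : R :=
  atan ((al * Y t - Z t) / (Y t * Rpower (Y t) ((p - 1) / 2))).

Definition ef_system (p al ga : R) (Y Z : R -> R) (s0 s1 : R) : Prop :=
  forall s, s0 <= s <= s1 ->
    is_derive Y s (al * Y s - Z s) /\ is_derive Z s (spow p (Y s) - ga * Z s).

Definition ef_energy (p al ga : R) (Y Z : R -> R) (s : R) : R :=
  (al * Y s - Z s) * (al * Y s - Z s) / 2 - al * ga * (Y s * Y s) / 2 + potential p (Y s).

Section EmdenFowlerSystem.
Variables (p al ga : R) (Y Z : R -> R) (s0 s1 : R).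
Hypothesis Hp : 1 < p.
Hypothesis Hga : 0 < ga.
Hypothesis Hal : ga <= al.
Hypothesis HS : ef_system p al ga Y Z s0 s1.

Local Notation En := (ef_energy p al ga Y Z).

Lemma ef_Y_derive s : s0 <= s <= s1 -> is_derive Y s (al * Y s - Z s).
Proof. intros Hs. apply (HS s Hs). Qed.

Lemma ef_slope_derive s : s0 <= s <= s1 ->
  is_derive (fun t => al * Y t - Z t) s (al * (al * Y s - Z s) - (spow p (Y s) - ga * Z s)).
Proof.
  intros Hs. destruct (HS s Hs) as [HY HZ].
  apply (is_derive_minus (fun t => al * Y t)); [apply is_derive_scal|]; auto.
Qed.

Lemma ef_energy_derive s : s0 <= s <= s1 ->
  is_derive En s ((al - ga) * ((al * Y s - Z s) * (al * Y s - Z s))).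
Proof.
  intros Hs. assert (HY := ef_Y_derive s Hs). assert (HW := ef_slope_derive s Hs).
  unfold ef_energy. eapply is_derive_eq_val.
  - apply (is_derive_plus
      (fun t => (al * Y t - Z t) * (al * Y t - Z t) / 2 - al * ga * (Y t * Y t) / 2)
      (fun t => potential p (Y t))).
    + apply (is_derive_minus (fun t => (al * Y t - Z t) * (al * Y t - Z t) / 2)).
      * eapply (is_derive_scal_l (V := R_NormedModule) (fun t => (al * Y t - Z t) * (al * Y t - Z t)) s _ (/ 2)).
        apply Derive.is_derive_mult; exact HW.
      * eapply (is_derive_scal_l (V := R_NormedModule) (fun t => al * ga * (Y t * Y t)) s _ (/ 2)).
        apply is_derive_scal, Derive.is_derive_mult; exact HY.
    + apply (is_derive_comp (potential p) Y); [apply is_derive_potential, Hp|exact HY].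
  - simpl_R_ops. field.
Qed.

Lemma ef_energy_mono x y : s0 <= x -> x <= y -> y <= s1 -> En x <= En y.
Proof.
  intros Hx Hxy Hy.
  assert (0 * (y - x) <= En y - En x); [|lra].
  apply (diff_ge_of_derive_ge _ (fun s => (al - ga) * ((al * Y s - Z s) * (al * Y s - Z s)))); auto.
  - intros s Hs. apply ef_energy_derive. lra.
  - intros s Hs. apply Rmult_le_pos; [lra|apply Rle_0_sqr].
Qed.

Lemma ef_energy_pos_of_Z_zero s : Z s = 0 -> 0 < Y s -> 0 < En s.
Proof.
  intros HZ HY. unfold ef_energy. rewrite HZ, potential_pos_eq by auto.
  assert (0 < Rpower (Y s) (p - 1) * Y s * Y s / (p + 1))
    by (apply Rdiv_lt_0_compat; [repeat apply Rmult_lt_0_compat; auto; apply Rpower_pos|lra]).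
  assert (0 <= (al - ga) * al * (Y s * Y s))
    by (apply Rmult_le_pos; [apply Rmult_le_pos|apply Rle_0_sqr]; lra).
  lra.
Qed.

(* There [0 <= En] forces [Y^(p-1) >= (p+1) al ga / 2 > al ga]. *)
Lemma ef_concave_at_critical_point x : 0 < Y x -> Z x = al * Y x -> 0 <= En x ->
  0 < spow p (Y x) - ga * Z x - al * (al * Y x - Z x).
Proof.
  intros Hy HZx HH. unfold ef_energy in HH.
  rewrite potential_pos_eq in HH by auto. rewrite spow_pos_eq by auto. rewrite HZx in HH |- *.
  set (R0 := Rpower (Y x) (p - 1)) in *. set (y := Y x) in *.
  assert (0 < y * y) by nra. assert (0 < al * ga) by nra.
  assert (HR : (p + 1) * (al * ga) / 2 <= R0).
  { replace (al * y - al * y) with 0 in HH by ring.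
    assert (0 <= (y * y) * (R0 - (p + 1) * (al * ga) / 2)); [|nra].
    replace ((y * y) * (R0 - (p + 1) * (al * ga) / 2))
      with ((p + 1) * (R0 * y * y / (p + 1) - al * ga * (y * y) / 2)) by (field; lra).
    apply Rmult_le_pos; lra. }
  replace (R0 * y - ga * (al * y) - al * (al * y - al * y)) with (y * (R0 - al * ga)) by ring.
  apply Rmult_lt_0_compat; nra.
Qed.

Lemma ef_angle_derive t : s0 <= t <= s1 -> 0 < Y t ->
  let u := Rpower (Y t) ((p - 1) / 2) in
  let T := (al * Y t - Z t) / (Y t * u) in
  is_derive (ef_angle p al Y Z) t
    (((al - ga) * T - u + al * ga / u - (p + 1) / 2 * u * (T * T)) / (1 + T * T)).
Proof.
  intros Ht Hyt u T. destruct (HS t Ht) as [HYd HZd].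
  set (c := (p - 1) / 2) in *.
  set (U := fun t => Rpower (Y t) c).
  assert (Hu0 : 0 < u) by apply Rpower_pos.
  assert (HUd : is_derive U t ((al * Y t - Z t) * (c * Rpower (Y t) (c - 1))))
    by (apply (is_derive_comp (fun y => Rpower y c) Y); [apply is_derive_Rpower|]; auto).
  assert (HYU : is_derive (fun t => Y t * U t) t
     ((al * Y t - Z t) * U t + Y t * ((al * Y t - Z t) * (c * Rpower (Y t) (c - 1)))))
    by (apply Derive.is_derive_mult; auto).
  assert (Hq := is_derive_div (fun t => al * Y t - Z t) (fun t => Y t * U t) t _ _
    (ef_slope_derive t Ht) HYU ltac:(apply Rgt_not_eq, Rmult_lt_0_compat; [|apply Rpower_pos]; auto)).
  eapply is_derive_eq_val; [apply (is_derive_comp atan _ t _ _ (is_derive_atan _) Hq)|].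
  fold U. change (U t) with u.
  assert (E1 : Rpower (Y t) (c - 1) = u / Y t) by (apply Rpower_pred; auto).
  assert (E2 : spow p (Y t) = u * u * Y t)
    by (rewrite spow_pos_eq by auto; unfold u, c; rewrite Rpower_half_sq; reflexivity).
  rewrite E1, E2. fold T. unfold Rsqr.
  assert (0 < Y t * u) by (apply Rmult_lt_0_compat; lra).
  assert (0 <= (al * Y t - Z t) * (al * Y t - Z t)) by apply Rle_0_sqr.
  simpl_R_ops. unfold T, c. field. repeat split; try lra. apply Rgt_not_eq. nra.
Qed.

(* While [Y >= y1] with [y1^(p-1) = dd^2], the angle decreases at rate at least
   [dd (p-1)/(p+1) / 2]; since [atan] has range of length [PI], this bounds the time. *)
Lemma ef_rotation_time a1 a2 y1 dd : s0 <= a1 -> a1 <= a2 -> a2 <= s1 -> 0 < y1 ->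
  (forall t, a1 <= t <= a2 -> y1 <= Y t) ->
  0 < dd -> dd * dd = (p + 1) * (al * ga) / 2 -> Rpower y1 (p - 1) = dd * dd ->
  al - ga <= dd * ((p - 1) / (p + 1)) ->
  a2 - a1 <= 2 * PI / (dd * ((p - 1) / (p + 1))).
Proof.
  intros Ha1 Ha12 Ha2 Hy1 HY Hdd Hdd2 Hy1p Hka.
  set (cc := (p - 1) / (p + 1)) in *.
  assert (Hcc0 : 0 < cc) by (unfold cc; apply Rdiv_lt_0_compat; lra).
  assert (HD : forall t, a1 <= t <= a2 -> exists D,
             is_derive (ef_angle p al Y Z) t D /\ D <= - (dd * cc / 2)).
  { intros t Ht. assert (Hyt : 0 < Y t) by (specialize (HY t Ht); lra).
    eexists. split; [apply ef_angle_derive; lra|].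
    set (u := Rpower (Y t) ((p - 1) / 2)). set (T := (al * Y t - Z t) / (Y t * u)).
    assert (Hud : dd <= u).
    { apply le_of_sq_le; [left; apply Rpower_pos|].
      unfold u. rewrite Rpower_half_sq, <- Hy1p. apply Rle_Rpower_l; [lra|].
      split; [|apply HY]; lra. }
    assert (HT : 0 < 1 + T * T) by (assert (0 <= T * T) by apply Rle_0_sqr; lra).
    apply (Rmult_le_reg_r (1 + T * T)); [auto|].
    unfold Rdiv. rewrite Rmult_assoc, Rinv_l by lra. rewrite Rmult_1_r.
    apply (riccati_rate_bound p (al * ga)); auto; lra. }
  assert (HF : ef_angle p al Y Z a2 - ef_angle p al Y Z a1 <= - (dd * cc / 2) * (a2 - a1)).
  { apply (diff_le_of_derive_le _ (Derive (ef_angle p al Y Z))); [lra| |];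
      intros x Hx; destruct (HD x Hx) as [D [HD1 HD2]];
      rewrite (is_derive_unique _ x D HD1); auto. }
  unfold ef_angle in HF.
  assert (B1 := atan_bound ((al * Y a1 - Z a1) / (Y a1 * Rpower (Y a1) ((p - 1) / 2)))).
  assert (B2 := atan_bound ((al * Y a2 - Z a2) / (Y a2 * Rpower (Y a2) ((p - 1) / 2)))).
  assert (0 < dd * cc) by (apply Rmult_lt_0_compat; auto).
  apply (Rmult_le_reg_r (dd * cc)); [auto|].
  replace (2 * PI / (dd * cc) * (dd * cc)) with (2 * PI) by (field; lra). lra.
Qed.

Section Zone.
Hypothesis Hs01 : s0 < s1.
Hypothesis HYpos : forall s, s0 <= s < s1 -> 0 < Y s.
Hypothesis HY1 : Y s1 = 0.
Hypothesis HZ1 : 0 < Z s1.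

Lemma ef_Y_nonneg s : s0 <= s <= s1 -> 0 <= Y s.
Proof.
  intros Hs. destruct (Req_dec s s1) as [->|]; [lra|]. left. apply HYpos. lra.
Qed.

Lemma ef_unimodal : 0 <= En s0 ->
  exists sm, s0 <= sm < s1 /\ 0 <= Z sm - al * Y sm /\
    (sm = s0 \/ forall s, s0 <= s <= sm -> Z s - al * Y s <= 0) /\
    (forall s, sm < s <= s1 -> 0 < Z s - al * Y s).
Proof.
  intros HH0.
  set (W := fun t => Z t - al * Y t).
  assert (HD : forall x, s0 <= x <= s1 ->
    is_derive W x (spow p (Y x) - ga * Z x - al * (al * Y x - Z x))).
  { intros x Hx. destruct (HS x Hx) as [HYd HZd].
    apply (is_derive_minus Z (fun t => al * Y t)); [|apply is_derive_scal]; auto. }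
  assert (Hup : forall x y, s0 <= x -> x < y -> y <= s1 -> 0 <= W x -> 0 < W y).
  { apply (zero_crossing_upward W _ s0 s1 HD). intros x Hx HW. unfold W in HW.
    assert (x < s1) by (destruct (Req_dec x s1) as [->|]; [rewrite HY1 in HW; lra|lra]).
    apply ef_concave_at_critical_point; [apply HYpos; lra|lra|].
    apply Rle_trans with (1 := HH0). apply ef_energy_mono; lra. }
  assert (HW1 : 0 < W s1) by (unfold W; rewrite HY1; lra).
  destruct (Rle_or_lt 0 (W s0)) as [Hw0|Hw0].
  - exists s0. split; [lra|]. split; [exact Hw0|]. split; [left; reflexivity|].
    intros s Hs. apply (Hup s0 s); lra.
  - destruct (Ranalysis5.IVT_interv W s0 s1) as [z [Hz1 Hz2]]; [|lra|lra|lra|].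
    { intros a Ha. apply (is_derive_continuity_pt W a _ (HD a Ha)). }
    assert (z < s1) by (destruct (Req_dec z s1) as [->|]; lra).
    exists z. split; [lra|]. split; [unfold W in Hz2; lra|]. split.
    + right. intros s Hs. destruct (Rle_or_lt (W s) 0) as [Hl|Hl]; [exact Hl|].
      assert (s < z) by (destruct (Req_dec s z) as [->|]; lra).
      assert (0 < W z) by (apply (Hup s z); lra). lra.
    + intros s Hs. apply (Hup z s); lra.
Qed.

Hypothesis HZnn : forall s, s0 <= s <= s1 -> 0 <= Z s.

Section Peak.
Variable sm : R.
Hypothesis Hsm : s0 <= sm < s1.
Hypothesis Hpeak : 0 <= Z sm - al * Y sm.
Hypothesis Hasc : sm = s0 \/ forall s, s0 <= s <= sm -> Z s - al * Y s <= 0.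
Hypothesis Hdesc : forall s, sm < s <= s1 -> 0 < Z s - al * Y s.

Lemma ef_Y_incr x y : s0 <= x -> x <= y -> y <= sm -> Y x <= Y y.
Proof.
  intros Hx Hxy Hy. destruct Hasc as [->|Ha]; [replace x with y by lra; lra|].
  assert (0 * (y - x) <= Y y - Y x); [|lra].
  apply (diff_ge_of_derive_ge Y (fun t => al * Y t - Z t)); [lra| |].
  - intros t Ht. apply ef_Y_derive. lra.
  - intros t Ht. assert (Z t - al * Y t <= 0) by (apply Ha; lra). lra.
Qed.

Lemma ef_Y_decr x y : sm <= x -> x <= y -> y <= s1 -> Y y <= Y x.
Proof.
  intros Hx Hxy Hy. assert (Y y - Y x <= 0 * (y - x)); [|lra].
  apply (diff_le_of_derive_le Y (fun t => al * Y t - Z t)); [lra| |].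
  - intros t Ht. apply ef_Y_derive. lra.
  - intros t Ht. destruct (Req_dec t sm) as [->|]; [lra|].
    assert (0 < Z t - al * Y t) by (apply Hdesc; lra). lra.
Qed.

Lemma ef_Y_le_peak s : s0 <= s <= s1 -> Y s <= Y sm.
Proof.
  intros Hs. destruct (Rle_or_lt s sm).
  - apply ef_Y_incr; lra.
  - apply ef_Y_decr; lra.
Qed.

(* On the ascent [0 <= al Y - Z <= al Y <= al Y(sm)], so [En' <= (al - ga) al Y(sm) Y']. *)
Lemma ef_energy_ascent : En sm <= En s0 + (al - ga) * al * (Y sm * Y sm).
Proof.
  set (Ym := Y sm).
  assert (HYm : 0 < Ym) by (apply HYpos; lra).
  destruct Hasc as [->|Ha].
  - assert (0 <= (al - ga) * al * (Ym * Ym)); [|unfold Ym in *; lra].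
    apply Rmult_le_pos; [apply Rmult_le_pos|apply Rle_0_sqr]; lra.
  - assert (Hk : (En sm - (al - ga) * al * Ym * Y sm) - (En s0 - (al - ga) * al * Ym * Y s0)
                 <= 0 * (sm - s0)).
    { apply (diff_le_of_derive_le (fun t => En t - (al - ga) * al * Ym * Y t)
        (fun t => (al - ga) * ((al * Y t - Z t) * (al * Y t - Z t))
                  - (al - ga) * al * Ym * (al * Y t - Z t))); [lra| |].
      - intros x Hx. apply (is_derive_minus En).
        + apply ef_energy_derive. lra.
        + apply is_derive_scal, ef_Y_derive. lra.
      - intros x Hx. assert (Z x - al * Y x <= 0) by (apply Ha; lra).
        assert (0 <= Z x) by (apply HZnn; lra).
        assert (Y x <= Ym) by (apply ef_Y_le_peak; lra).
        assert (al * Y x <= al * Ym) by (apply Rmult_le_compat_l; lra).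
        assert (0 <= (al - ga) * ((al * Y x - Z x) * (al * Ym - (al * Y x - Z x))))
          by (apply Rmult_le_pos; [|apply Rmult_le_pos]; lra).
        lra. }
    assert (0 < Y s0) by (apply HYpos; lra).
    assert (0 <= (al - ga) * al * Ym * Y s0)
      by (repeat apply Rmult_le_pos; lra).
    unfold Ym in *. lra.
Qed.

(* On the descent [|al Y - Z| <= K := sqrt (2 En(s1) + al ga Y(sm)^2)], so
   [En' <= -(al - ga) K Y']. *)
Lemma ef_energy_descent : 0 <= En s0 ->
  En s1 <= En sm + (al - ga) * Y sm * sqrt (2 * En s1 + al * ga * (Y sm * Y sm)).
Proof.
  intros HH0. set (Ym := Y sm).
  assert (HYm : 0 < Ym) by (apply HYpos; lra).
  assert (Hh : 0 <= En s1) by (apply Rle_trans with (1 := HH0), ef_energy_mono; lra).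
  assert (0 <= al * ga * (Ym * Ym)) by (apply Rmult_le_pos; [nra|apply Rle_0_sqr]).
  set (K := sqrt (2 * En s1 + al * ga * (Ym * Ym))).
  assert (HKK : K * K = 2 * En s1 + al * ga * (Ym * Ym)) by (apply sqrt_sqrt; lra).
  assert (HK0 : 0 <= K) by apply sqrt_pos.
  assert (Hk : (En s1 + (al - ga) * K * Y s1) - (En sm + (al - ga) * K * Y sm) <= 0 * (s1 - sm)).
  { apply (diff_le_of_derive_le (fun t => En t + (al - ga) * K * Y t)
      (fun t => (al - ga) * ((al * Y t - Z t) * (al * Y t - Z t))
                + (al - ga) * K * (al * Y t - Z t))); [lra| |].
    - intros x Hx. apply (is_derive_plus En).
      + apply ef_energy_derive. lra.
      + apply is_derive_scal, ef_Y_derive. lra.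
    - intros x Hx. set (W := al * Y x - Z x).
      assert (Hw1 : W <= 0).
      { unfold W. destruct (Req_dec x sm) as [->|]; [lra|].
        assert (0 < Z x - al * Y x) by (apply Hdesc; lra). lra. }
      assert (HWW : W * W <= K * K).
      { rewrite HKK. assert (Hx0 : En x <= En s1) by (apply ef_energy_mono; lra).
        unfold ef_energy at 1 in Hx0. fold W in Hx0.
        assert (0 <= potential p (Y x)) by (apply potential_nonneg, Hp).
        assert (0 <= Y x) by (apply ef_Y_nonneg; lra).
        assert (Y x <= Ym) by (apply ef_Y_le_peak; lra).
        assert (al * ga * (Y x * Y x) <= al * ga * (Ym * Ym))
          by (apply Rmult_le_compat_l; [nra|apply Rmult_le_compat; lra]).
        lra. }
      assert (Hw2 : - K <= W) by nra.
      assert (0 <= (al - ga) * (- W * (W + K))) by (apply Rmult_le_pos; [|apply Rmult_le_pos]; lra).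
      lra. }
  rewrite HY1 in Hk. unfold Ym, K in *. lra.
Qed.

Lemma ef_ascent_time y1 q : 0 < q -> 0 < y1 -> y1 < Y sm ->
  (forall s, s0 <= s <= s1 -> Y s <= y1 -> q * q <= (al * Y s - Z s) * (al * Y s - Z s)) ->
  exists a, s0 <= a <= sm /\ a - s0 <= y1 / q /\ forall t, a <= t <= sm -> y1 <= Y t.
Proof.
  intros Hq Hy1 Hpk Hslope.
  destruct (Rle_or_lt y1 (Y s0)) as [Hc|Hc].
  - exists s0. split; [lra|]. split.
    + replace (s0 - s0) with 0 by ring. left. apply Rdiv_lt_0_compat; auto.
    + intros t Ht. apply Rle_trans with (Y s0); [auto|apply ef_Y_incr; lra].
  - assert (s0 < sm) by (destruct (Req_dec s0 sm) as [<-|]; lra).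
    destruct (Ranalysis5.IVT_interv (fun t => Y t - y1) s0 sm) as [a [Ha1 Ha2]];
      [|lra|lra|lra|].
    { intros a Ha. apply continuity_pt_minus; [|apply continuity_pt_const; intros ? ?; auto].
      apply (is_derive_continuity_pt Y a _ (ef_Y_derive a ltac:(lra))). }
    exists a. split; [lra|]. split.
    + assert (0 < Y s0) by (apply HYpos; lra).
      assert (Hmvt : q * (a - s0) <= Y a - Y s0).
      { apply (diff_ge_of_derive_ge Y (fun t => al * Y t - Z t)); [lra| |].
        - intros t Ht. apply ef_Y_derive. lra.
        - intros t Ht. assert (Y t <= Y a) by (apply ef_Y_incr; lra).
          destruct Hasc as [->|Ha]; [lra|].
          assert (Z t - al * Y t <= 0) by (apply Ha; lra).
          apply le_of_sq_le; [lra|]. apply Hslope; lra. }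
      apply (Rmult_le_reg_l q); [auto|]. replace (q * (y1 / q)) with y1 by (field; lra). lra.
    + intros t Ht. assert (Y a <= Y t) by (apply ef_Y_incr; lra). lra.
Qed.

Lemma ef_descent_time y1 q : 0 < q -> 0 < y1 -> y1 < Y sm ->
  (forall s, s0 <= s <= s1 -> Y s <= y1 -> q * q <= (al * Y s - Z s) * (al * Y s - Z s)) ->
  exists a, sm <= a <= s1 /\ s1 - a <= y1 / q /\ forall t, sm <= t <= a -> y1 <= Y t.
Proof.
  intros Hq Hy1 Hpk Hslope.
  destruct (Ranalysis5.IVT_interv (fun t => y1 - Y t) sm s1) as [a [Ha1 Ha2]];
    [|lra|lra|rewrite HY1; lra|].
  { intros x Hx. apply continuity_pt_minus; [apply continuity_pt_const; intros ? ?; auto|].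
    apply (is_derive_continuity_pt Y x _ (ef_Y_derive x ltac:(lra))). }
  exists a. split; [lra|]. split.
  - assert (Hmvt : Y s1 - Y a <= (- q) * (s1 - a)).
    { apply (diff_le_of_derive_le Y (fun t => al * Y t - Z t)); [lra| |].
      - intros t Ht. apply ef_Y_derive. lra.
      - intros t Ht. assert (sm < a) by (destruct (Req_dec sm a) as [<-|]; lra).
        assert (0 < Z t - al * Y t) by (apply Hdesc; lra).
        assert (Y t <= Y a) by (apply ef_Y_decr; lra).
        assert (q <= - (al * Y t - Z t)); [|lra].
        apply le_of_sq_le; [lra|]. rewrite Rmult_opp_opp. apply Hslope; lra. }
    rewrite HY1 in Hmvt.
    apply (Rmult_le_reg_l q); [auto|]. replace (q * (y1 / q)) with y1 by (field; lra). lra.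
  - intros t Ht. assert (Y a <= Y t) by (apply ef_Y_decr; lra). lra.
Qed.

End Peak.

Lemma ef_energy_gain : 0 <= En s0 ->
  exists Ym, 0 <= Ym /\ (forall s, s0 <= s <= s1 -> Y s <= Ym) /\
    potential p Ym - al * ga * (Ym * Ym) / 2 <= En s0 + (al - ga) * al * (Ym * Ym) /\
    En s1 <= En s0 + (al - ga) * al * (Ym * Ym)
            + (al - ga) * Ym * sqrt (2 * En s1 + al * ga * (Ym * Ym)).
Proof.
  intros HH0. destruct (ef_unimodal HH0) as [sm [Hsm [Hpeak [Hasc Hdesc]]]].
  assert (Hup := ef_energy_ascent sm Hsm Hpeak Hasc Hdesc).
  assert (Hdown := ef_energy_descent sm Hsm Hpeak Hasc Hdesc HH0).
  exists (Y sm). split; [left; apply HYpos; lra|]. split; [apply (ef_Y_le_peak sm); auto|].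
  split; [|lra].
  assert (0 <= (al * Y sm - Z sm) * (al * Y sm - Z sm) / 2)
    by (apply Rmult_le_pos; [apply Rle_0_sqr|lra]).
  unfold ef_energy at 1 in Hup. lra.
Qed.

Lemma ef_final_energy_bound B : 0 <= En s0 <= 1 -> al - ga <= 1 / 2 -> 1 <= B ->
  (p + 1) * (1 + al * ga / 2 + (al - ga) * al) < Rpower B (p - 1) ->
  En s1 <= 2 * En s0 + (al - ga) * (2 * al + 1 + al * ga) * (B * B).
Proof.
  intros [HH0 HH1] Hka HB HBp.
  destruct (ef_energy_gain HH0) as [Ym [HYm0 [_ [Hpeak Hgain]]]].
  assert (Hh : 0 <= En s1) by (apply Rle_trans with (1 := HH0), ef_energy_mono; lra).
  set (E0 := En s0) in *. set (h := En s1) in *.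
  set (ka := al - ga) in *. set (be := al * ga) in *.
  assert (Hbe : 0 < be) by (unfold be; nra).
  assert (Hka0 : 0 <= ka) by (unfold ka; lra).
  clearbody ka be.
  assert (HYmB : Ym <= B).
  { assert (0 <= ka * al) by nra.
    apply (potential_growth_bound p (be / 2 + ka * al) E0); lra. }
  set (SS := sqrt (2 * h + be * (Ym * Ym))) in *.
  assert (HSS : SS * SS = 2 * h + be * (Ym * Ym))
    by (apply sqrt_sqrt; assert (0 <= be * (Ym * Ym)) by (apply Rmult_le_pos; [lra|apply Rle_0_sqr]); lra).
  (* AM-GM on [Ym * SS] absorbs half of [h] into the left-hand side. *)
  assert (Hk : ka * Ym * SS <= ka * h + ka * (1 + be) * (Ym * Ym) / 2).
  { assert (0 <= (Ym - SS) * (Ym - SS)) by apply Rle_0_sqr.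
    assert (Ham : ka * (Ym * SS) <= ka * ((Ym * Ym + SS * SS) / 2))
      by (apply Rmult_le_compat_l; lra).
    rewrite HSS in Ham. lra. }
  assert (Hyy : Ym * Ym <= B * B) by (apply Rmult_le_compat; lra).
  assert (h * (1 / 2) <= h * (1 - ka)) by (apply Rmult_le_compat_l; lra).
  assert (ka * (2 * al + 1 + be) * (Ym * Ym) <= ka * (2 * al + 1 + be) * (B * B))
    by (apply Rmult_le_compat_l; [apply Rmult_le_pos; lra|auto]).
  lra.
Qed.

Lemma ef_speed_bound s : 0 <= En s0 -> s0 <= s <= s1 ->
  - (sqrt (al * ga) * (Y s + sqrt (2 * En s1 / (al * ga)))) <= al * Y s - Z s.
Proof.
  intros HH0 Hs.
  set (h := En s1). set (be := al * ga).
  assert (Hbe : 0 < be) by (unfold be; nra).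
  assert (Hh : 0 <= h) by (apply Rle_trans with (1 := HH0), ef_energy_mono; lra).
  set (k := sqrt be). set (c0 := sqrt (2 * h / be)).
  assert (Hkk : k * k = be) by (apply sqrt_sqrt; lra).
  assert (Hcc : c0 * c0 = 2 * h / be) by (apply sqrt_sqrt, Rdiv_le_0_compat; lra).
  assert (0 <= k /\ 0 <= c0) as [] by (split; apply sqrt_pos).
  set (W := al * Y s - Z s).
  assert (HW : W * W <= 2 * h + be * (Y s * Y s)).
  { assert (Hx0 : En s <= h) by (apply ef_energy_mono; lra).
    unfold ef_energy in Hx0. fold W be in Hx0.
    assert (0 <= potential p (Y s)) by (apply potential_nonneg, Hp). lra. }
  assert (HY0 : 0 <= Y s) by (apply ef_Y_nonneg; lra).
  assert (0 <= k * (Y s + c0)) by (apply Rmult_le_pos; lra).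
  assert (W * W <= (k * (Y s + c0)) * (k * (Y s + c0))); [|nra].
  replace ((k * (Y s + c0)) * (k * (Y s + c0)))
    with ((k * k) * (Y s * Y s) + 2 * (k * k) * (Y s * c0) + (k * k) * (c0 * c0)) by ring.
  rewrite Hkk, Hcc. replace (be * (2 * h / be)) with (2 * h) by (field; lra).
  assert (0 <= be * (Y s * c0)) by (apply Rmult_le_pos; nra). lra.
Qed.

(* By [ef_speed_bound], [(Y + c0) e^(k s)] is nondecreasing, and [Y(s1) = 0]. *)
Lemma ef_Y_growth_bound s : 0 <= En s0 -> s0 <= s <= s1 ->
  Y s <= sqrt (2 * En s1 / (al * ga)) * (exp (sqrt (al * ga) * (s1 - s)) - 1).
Proof.
  intros HH0 Hs.
  set (k := sqrt (al * ga)). set (c0 := sqrt (2 * En s1 / (al * ga))).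
  set (Q := fun t => (Y t + c0) * exp (k * t)).
  assert (HQ : 0 * (s1 - s) <= Q s1 - Q s).
  { apply (diff_ge_of_derive_ge Q
      (fun t => (al * Y t - Z t) * exp (k * t) + (Y t + c0) * (k * exp (k * t)))); [lra| |].
    - intros t Ht. unfold Q. eapply is_derive_eq_val.
      + apply Derive.is_derive_mult.
        * apply (is_derive_plus Y (fun _ => c0)); [apply ef_Y_derive; lra|apply is_derive_const].
        * apply (is_derive_comp exp (fun t => k * t)); [apply is_derive_exp|].
          apply is_derive_scal, is_derive_id.
      + simpl_R_ops. ring.
    - intros t Ht. assert (Hsp := ef_speed_bound t HH0 ltac:(lra)). fold k c0 in Hsp.
      assert (0 < exp (k * t)) by apply exp_pos.
      replace ((al * Y t - Z t) * exp (k * t) + (Y t + c0) * (k * exp (k * t)))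
        with ((al * Y t - Z t + k * (Y t + c0)) * exp (k * t)) by ring.
      apply Rmult_le_pos; lra. }
  unfold Q in HQ. rewrite HY1 in HQ.
  assert (E : exp (k * s1) = exp (k * s) * exp (k * (s1 - s))) by (rewrite <- exp_plus; f_equal; ring).
  rewrite E in HQ.
  assert (0 < exp (k * s)) by apply exp_pos.
  assert (Y s + c0 <= c0 * exp (k * (s1 - s))) by (apply (Rmult_le_reg_r (exp (k * s))); nra).
  lra.
Qed.

(* Below the level [y1] the potential is dominated by the quadratic term, so there
   [H <= (al Y - Z)^2 / 2]: the energy forces a minimal speed. *)
Lemma ef_slope_at_low_level y1 s : 0 < y1 -> Rpower y1 (p - 1) <= (p + 1) * (al * ga) / 2 ->
  s0 <= s <= s1 -> Y s <= y1 -> 2 * En s0 <= (al * Y s - Z s) * (al * Y s - Z s).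
Proof.
  intros Hy1 Hy1p Hs Hys.
  assert (Hmon : En s0 <= En s) by (apply ef_energy_mono; lra).
  assert (HP : potential p (Y s) <= al * ga * (Y s * Y s) / 2).
  { destruct (ef_Y_nonneg s Hs) as [Hpos|H0].
    - apply potential_le_quadratic; auto.
      apply Rle_trans with (Rpower y1 (p - 1)); [apply Rle_Rpower_l; lra|auto].
    - rewrite <- H0. unfold potential. rewrite !Rmult_0_r. lra. }
  unfold ef_energy at 2 in Hmon. lra.
Qed.

(* Time below [y1] on each side of the maximum is at most [y1 / sqrt (2 En s0)];
   time above [y1] is controlled by the rotation of the angle. *)
Lemma ef_zone_length y1 dd : Z s0 = 0 -> 0 < y1 -> 0 < dd ->
  dd * dd = (p + 1) * (al * ga) / 2 -> Rpower y1 (p - 1) = dd * dd ->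
  al - ga <= dd * ((p - 1) / (p + 1)) ->
  s1 - s0 <= 2 * y1 / sqrt (2 * En s0) + 2 * PI / (dd * ((p - 1) / (p + 1))).
Proof.
  intros HZ0 Hy1 Hdd Hdd2 Hy1p Hka.
  assert (HY0 : 0 < Y s0) by (apply HYpos; lra).
  assert (HE0 : 0 < En s0) by (apply ef_energy_pos_of_Z_zero; auto).
  set (q := sqrt (2 * En s0)).
  assert (Hq : 0 < q) by (apply sqrt_lt_R0; lra).
  assert (Hslope : forall s, s0 <= s <= s1 -> Y s <= y1 ->
            q * q <= (al * Y s - Z s) * (al * Y s - Z s)).
  { intros s Hs Hys. unfold q. rewrite sqrt_sqrt by lra.
    apply (ef_slope_at_low_level y1); auto; lra. }
  destruct (ef_unimodal ltac:(lra)) as [sm [Hsm [Hpeak [Hasc Hdesc]]]].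
  assert (Hsm0 : s0 < sm)
    by (destruct (Req_dec s0 sm) as [<-|]; [rewrite HZ0 in Hpeak; nra|lra]).
  assert (Hflat : Z sm - al * Y sm = 0).
  { destruct Hasc as [|Ha]; [lra|]. assert (Z sm - al * Y sm <= 0) by (apply Ha; lra). lra. }
  assert (Hpk : y1 < Y sm).
  { destruct (Rle_or_lt (Y sm) y1) as [Hl|]; [|auto].
    assert (Hs := Hslope sm ltac:(lra) Hl).
    replace (al * Y sm - Z sm) with 0 in Hs by lra. nra. }
  destruct (ef_ascent_time sm Hsm Hpeak Hasc Hdesc y1 q Hq Hy1 Hpk Hslope)
    as [a1 [Ha1 [Ht1 Habove1]]].
  destruct (ef_descent_time sm Hsm Hpeak Hdesc y1 q Hq Hy1 Hpk Hslope)
    as [a2 [Ha2 [Ht2 Habove2]]].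
  assert (Hrot : a2 - a1 <= 2 * PI / (dd * ((p - 1) / (p + 1)))).
  { apply (ef_rotation_time a1 a2 y1 dd); auto; try lra.
    intros t Ht. destruct (Rle_or_lt t sm); [apply Habove1|apply Habove2]; lra. }
  assert (2 * y1 / q = y1 / q + y1 / q) by (field; lra). lra.
Qed.

End Zone.

End EmdenFowlerSystem.

Lemma spow_scale p c w : 0 < c -> spow p (c * w) = Rpower c (p - 1) * c * spow p w.
Proof.
  intros Hc. unfold spow. destruct (Req_dec w 0) as [->|Hw]; [rewrite !Rmult_0_r; ring|].
  rewrite Rabs_mult, Rabs_right by lra.
  rewrite <- Rpower_mult_distr by (auto; apply Rabs_pos_lt; auto). ring.
Qed.

Lemma spow_sign p sg w : sg * sg = 1 -> spow p (sg * w) = sg * spow p w.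
Proof. intros Hs. unfold spow. rewrite Rabs_mult, sign_abs, Rmult_1_l by auto. ring. Qed.

Lemma radial_dv_derive M p (v dv : R -> R) r :
  (forall t, 0 < t < 1 -> is_derive (fun s => Rpower s (M - 1) * dv s) t
                                    (- (Rpower t (M - 1) * spow p (v t)))) ->
  0 < r < 1 -> is_derive dv r (- spow p (v r) - (M - 1) / r * dv r).
Proof.
  intros Hd Hr.
  apply is_derive_ext_loc with (f := fun s => (Rpower s (M - 1) * dv s) * Rpower s (- (M - 1))).
  { apply locally_interval with (a := Finite 0) (b := p_infty); simpl; auto; [lra|].
    intros y Hy _. rewrite Rmult_assoc, (Rmult_comm (dv y)), <- Rmult_assoc, <- Rpower_plus.
    replace (M - 1 + - (M - 1)) with 0 by ring. rewrite Rpower_O by auto. ring. }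
  eapply is_derive_eq_val; [apply Derive.is_derive_mult; [apply Hd; auto|apply is_derive_Rpower; lra]|].
  assert (E1 : Rpower r (M - 1) * Rpower r (- (M - 1)) = 1)
    by (rewrite <- Rpower_plus; replace (M - 1 + - (M - 1)) with 0 by ring; apply Rpower_O; lra).
  assert (E2 : Rpower r (M - 1) * Rpower r (- (M - 1) - 1) = / r).
  { rewrite <- Rpower_plus. replace (M - 1 + (- (M - 1) - 1)) with (Ropp 1) by ring.
    rewrite Rpower_Ropp, Rpower_1; lra. }
  transitivity (- spow p (v r) * (Rpower r (M - 1) * Rpower r (- (M - 1)))
                - (M - 1) * dv r * (Rpower r (M - 1) * Rpower r (- (M - 1) - 1))); [ring|].
  rewrite E1, E2. field. lra.
Qed.

(* Emden-Fowler variables [s = ln r]; [sg = +-1] makes [Y] positive on the nodal zone. *)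
Definition ef_Y (p sg : R) (v : R -> R) (s : R) : R :=
  sg * (exp (2 / (p - 1) * s) * v (exp s)).

Definition ef_Z (p sg : R) (dv : R -> R) (s : R) : R :=
  - sg * (exp ((2 / (p - 1) + 1) * s) * dv (exp s)).

Lemma ef_system_of_radial M p sg (v dv : R -> R) s0 s1 : 1 < p -> sg * sg = 1 -> s1 < 0 ->
  (forall t, 0 < t < 1 -> is_derive v t (dv t)) ->
  (forall t, 0 < t < 1 -> is_derive (fun s => Rpower s (M - 1) * dv s) t
                                    (- (Rpower t (M - 1) * spow p (v t)))) ->
  ef_system p (2 / (p - 1)) (M - 2 - 2 / (p - 1)) (ef_Y p sg v) (ef_Z p sg dv) s0 s1.
Proof.
  intros Hp Hsg Hs1 Hv Hdv s Hs.
  set (al := 2 / (p - 1)).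
  assert (He : 0 < exp s < 1) by (split; [apply exp_pos|rewrite <- exp_0; apply exp_increasing; lra]).
  assert (Hea : forall c, is_derive (fun x => exp (c * x)) s (c * exp (c * s))).
  { intros c. eapply is_derive_eq_val.
    - apply (is_derive_comp exp (fun x => c * x)); [apply is_derive_exp|].
      apply is_derive_scal, is_derive_id.
    - simpl_R_ops. ring. }
  assert (Eexp : forall a b, exp (a * s) * exp (b * s) = exp ((a + b) * s))
    by (intros; rewrite <- exp_plus; f_equal; ring).
  assert (Hvc : is_derive (fun x => v (exp x)) s (exp s * dv (exp s)))
    by (apply (is_derive_comp v exp); [apply Hv; auto|apply is_derive_exp]).
  assert (Hdvc : is_derive (fun x => dv (exp x)) s
             (exp s * (- spow p (v (exp s)) - (M - 1) / exp s * dv (exp s))))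
    by (apply (is_derive_comp dv exp); [apply radial_dv_derive; auto|apply is_derive_exp]).
  unfold ef_Y, ef_Z. fold al. split.
  - eapply is_derive_eq_val; [apply is_derive_scal, Derive.is_derive_mult; [apply Hea|apply Hvc]|].
    transitivity (sg * (al * exp (al * s) * v (exp s))
                  - - sg * ((exp (al * s) * exp (1 * s)) * dv (exp s))); [rewrite Rmult_1_l; ring|].
    rewrite Eexp. ring.
  - eapply is_derive_eq_val; [apply is_derive_scal, Derive.is_derive_mult; [apply Hea|apply Hdvc]|].
    rewrite spow_sign, spow_scale by (auto; apply exp_pos).
    assert (Ep : Rpower (exp (al * s)) (p - 1) = exp (2 * s))
      by (unfold Rpower; rewrite ln_exp; f_equal; unfold al; field; lra).
    rewrite Ep.
    replace (exp ((al + 1) * s) * (exp s * (- spow p (v (exp s)) - (M - 1) / exp s * dv (exp s))))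
      with ((exp ((al + 1) * s) * exp (1 * s)) * (- spow p (v (exp s)))
            - (M - 1) * exp ((al + 1) * s) * dv (exp s)) by (rewrite Rmult_1_l; field; lra).
    rewrite Eexp, (Rmult_comm (exp (2 * s))), Eexp.
    replace (al + 1 + 1) with (al + 2) by ring. ring.
Qed.

Section RadialFlux.
Variables (M p sg lo a : R) (v dv : R -> R).
Hypothesis HM : 1 < M.
Hypothesis Hsg : sg * sg = 1.
Hypothesis Hlo : 0 <= lo.
Hypothesis Hla : lo < a.
Hypothesis Ha1 : a < 1.
Hypothesis Hdv : forall t, 0 < t < 1 ->
  is_derive (fun s => Rpower s (M - 1) * dv s) t (- (Rpower t (M - 1) * spow p (v t))).
Hypothesis Hpos : forall x, lo < x < a -> 0 < sg * v x.

Lemma radial_flux_decr x y : lo < x -> x < y -> y <= a ->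
  sg * (Rpower y (M - 1) * dv y) < sg * (Rpower x (M - 1) * dv x).
Proof.
  intros Hx Hxy Hy.
  set (G := fun r => sg * (Rpower r (M - 1) * dv r)).
  assert (- G x < - G y); [|unfold G in *; lra].
  apply (lt_of_derive_pos (fun r => - G r) (fun r => Rpower r (M - 1) * spow p (sg * v r))).
  - exact Hxy.
  - intros r Hr. eapply is_derive_eq_val.
    + apply (is_derive_opp G), is_derive_scal, Hdv. lra.
    + rewrite spow_sign by auto. simpl_R_ops. ring.
  - intros r Hr. apply Rmult_lt_0_compat; [apply Rpower_pos|].
    assert (0 < sg * v r) by (apply Hpos; lra).
    rewrite spow_pos_eq by auto. apply Rmult_lt_0_compat; [apply Rpower_pos|auto].
Qed.

Lemma sign_dv_neg_of_flux_neg r : 0 < r -> sg * (Rpower r (M - 1) * dv r) < 0 -> sg * dv r < 0.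
Proof.
  intros Hr HG. assert (0 < Rpower r (M - 1)) by apply Rpower_pos.
  replace (sg * (Rpower r (M - 1) * dv r)) with (Rpower r (M - 1) * (sg * dv r)) in HG by ring.
  nra.
Qed.

Lemma radial_dv_sign_after_crit sig : lo < sig < a -> dv sig = 0 ->
  forall r, sig < r <= a -> sg * dv r < 0.
Proof.
  intros Hsig Hd0 r Hr. apply sign_dv_neg_of_flux_neg; [lra|].
  assert (H := radial_flux_decr sig r ltac:(lra) ltac:(lra) ltac:(lra)).
  rewrite Hd0, !Rmult_0_r in H. exact H.
Qed.

(* At the centre the flux [r^(M-1) v'(r)] vanishes in the limit since [v'(0+) = 0]. *)
Lemma radial_dv_sign_from_center : lo = 0 -> filterlim dv (at_right 0) (locally 0) ->
  forall r, 0 < r <= a -> sg * dv r < 0.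
Proof.
  intros Hlo0 Hlim.
  set (G := fun r => sg * (Rpower r (M - 1) * dv r)).
  assert (Hle : forall y, 0 < y <= a -> G y <= 0).
  { intros y Hy. destruct (Rle_or_lt (G y) 0) as [Hg|Hg]; [auto|exfalso].
    destruct (filterlim_at_right_eps dv 0 0 Hlim (G y) Hg) as [d [Hd0 Hd1]].
    set (x := Rmin d y / 2).
    assert (0 < Rmin d y <= d /\ Rmin d y <= y) as [[]]
      by (split; [split; [apply Rmin_pos|apply Rmin_l]|apply Rmin_r]; lra).
    assert (Hdx : Rabs (dv x - 0) < G y) by (apply Hd1; unfold x; lra).
    assert (G y < G x) by (apply radial_flux_decr; unfold x; lra).
    assert (G x <= Rabs (dv x)).
    { unfold G. rewrite <- Rmult_assoc.
      apply Rle_trans with (Rabs (sg * Rpower x (M - 1) * dv x)); [apply Rle_abs|].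
      rewrite !Rabs_mult, sign_abs, Rmult_1_l, (Rabs_right (Rpower _ _))
        by (auto; left; apply Rpower_pos).
      assert (Rpower x (M - 1) <= 1) by (apply Rpower_le_1; unfold x; lra).
      assert (0 <= Rabs (dv x)) by apply Rabs_pos. nra. }
    rewrite Rminus_0_r in Hdx. lra. }
  intros r Hr. apply sign_dv_neg_of_flux_neg; [lra|].
  assert (G r < G (r / 2)) by (apply radial_flux_decr; lra).
  assert (G (r / 2) <= 0) by (apply Hle; lra). unfold G in *. lra.
Qed.

End RadialFlux.

Lemma exp_mul_le c eta x : 0 < c -> 0 < eta -> x <= ln eta / c -> exp (c * x) <= eta.
Proof.
  intros Hc He Hx. rewrite <- (exp_ln eta) by auto. apply exp_le.
  apply (Rmult_le_compat_l c) in Hx; [|lra].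
  replace (c * (ln eta / c)) with (ln eta) in Hx by (field; lra). lra.
Qed.

Lemma ef_YZ_small_at_minus_infty p sg (v dv : R -> R) : 1 < p -> sg * sg = 1 ->
  filterlim v (at_right 0) (locally (v 0)) -> filterlim dv (at_right 0) (locally 0) ->
  forall eta, 0 < eta -> exists X, forall x, x <= X ->
    Rabs (ef_Y p sg v x) <= eta /\ Rabs (ef_Z p sg dv x) <= eta.
Proof.
  intros Hp Hsg Hv Hdv eta He.
  set (al := 2 / (p - 1)).
  assert (Hal : 0 < al) by (unfold al; apply Rdiv_lt_0_compat; lra).
  destruct (filterlim_at_right_eps v 0 (v 0) Hv 1 ltac:(lra)) as [d1 [Hd1 Hv1]].
  destruct (filterlim_at_right_eps dv 0 0 Hdv 1 ltac:(lra)) as [d2 [Hd2 Hv2]].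
  set (V := Rabs (v 0) + 1).
  assert (HV : 0 < V) by (unfold V; assert (0 <= Rabs (v 0)) by apply Rabs_pos; lra).
  exists (Rmin (Rmin (ln d1 - 1) (ln d2 - 1)) (Rmin (ln (eta / V) / al) (ln eta / (al + 1)))).
  intros x Hx.
  assert (Hx1 : x <= ln d1 - 1)
    by (eapply Rle_trans; [exact Hx|]; eapply Rle_trans; [apply Rmin_l|apply Rmin_l]).
  assert (Hx2 : x <= ln d2 - 1)
    by (eapply Rle_trans; [exact Hx|]; eapply Rle_trans; [apply Rmin_l|apply Rmin_r]).
  assert (Hx3 : x <= ln (eta / V) / al)
    by (eapply Rle_trans; [exact Hx|]; eapply Rle_trans; [apply Rmin_r|apply Rmin_l]).
  assert (Hx4 : x <= ln eta / (al + 1))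
    by (eapply Rle_trans; [exact Hx|]; eapply Rle_trans; [apply Rmin_r|apply Rmin_r]).
  assert (Hexp_lt : forall d, 0 < d -> x <= ln d - 1 -> 0 < exp x < 0 + d).
  { intros d Hd Hxd. split; [apply exp_pos|].
    rewrite Rplus_0_l, <- (exp_ln d) by auto. apply exp_increasing. lra. }
  specialize (Hv1 (exp x) (Hexp_lt d1 Hd1 Hx1)).
  specialize (Hv2 (exp x) (Hexp_lt d2 Hd2 Hx2)). rewrite Rminus_0_r in Hv2.
  assert (HvV : Rabs (v (exp x)) <= V).
  { unfold V. replace (v (exp x)) with ((v (exp x) - v 0) + v 0) by ring.
    assert (H := Rabs_triang (v (exp x) - v 0) (v 0)). lra. }
  unfold ef_Y, ef_Z. fold al.
  rewrite !Rabs_mult, Rabs_Ropp, sign_abs, !Rmult_1_l, !(Rabs_right (exp _))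
    by (auto; left; apply exp_pos).
  assert (0 <= Rabs (v (exp x)) /\ 0 <= Rabs (dv (exp x))) as []
    by (split; apply Rabs_pos).
  split.
  - assert (exp (al * x) <= eta / V) by (apply exp_mul_le; auto; apply Rdiv_lt_0_compat; auto).
    assert (exp (al * x) * Rabs (v (exp x)) <= eta / V * V)
      by (apply Rmult_le_compat; auto; left; apply exp_pos).
    replace (eta / V * V) with eta in * by (field; lra). lra.
  - assert (exp ((al + 1) * x) <= eta) by (apply exp_mul_le; auto; lra).
    assert (exp ((al + 1) * x) * Rabs (dv (exp x)) <= eta * 1)
      by (apply Rmult_le_compat; auto; [left; apply exp_pos|lra]).
    lra.
Qed.

Lemma ef_energy_small p al ga (Y Z : R -> R) x eta : 1 < p -> 0 <= al -> 0 <= al * ga ->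
  0 <= eta <= 1 -> Rabs (Y x) <= eta -> Rabs (Z x) <= eta ->
  Rabs (ef_energy p al ga Y Z x) <= ((al + 1) * (al + 1) + al * ga + 1) * (eta * eta).
Proof.
  intros Hp Hal Hbe He HY HZ. unfold ef_energy.
  set (y := Y x) in *. set (z := Z x) in *.
  assert (sq : forall a b, Rabs a <= b -> a * a <= b * b).
  { intros a b Hab. assert (0 <= b) by (apply Rle_trans with (Rabs a); [apply Rabs_pos|auto]).
    apply (Rsqr_le_abs_1 a b). rewrite (Rabs_right b) by lra. auto. }
  assert (Hy2 : y * y <= eta * eta) by (apply sq; auto).
  assert (Hw : (al * y - z) * (al * y - z) <= (al + 1) * (al + 1) * (eta * eta)).
  { replace ((al + 1) * (al + 1) * (eta * eta)) with (((al + 1) * eta) * ((al + 1) * eta)) by ring.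
    apply sq. eapply Rle_trans; [apply Rabs_triang|].
    rewrite Rabs_Ropp, Rabs_mult, (Rabs_right al) by lra.
    assert (al * Rabs y <= al * eta) by (apply Rmult_le_compat_l; lra). lra. }
  assert (HP : 0 <= potential p y <= y * y)
    by (split; [apply potential_nonneg|apply potential_le_sq]; auto; lra).
  assert (al * ga * (y * y) <= al * ga * (eta * eta)) by (apply Rmult_le_compat_l; auto).
  assert (0 <= (al * y - z) * (al * y - z)) by apply Rle_0_sqr.
  assert (0 <= al * ga * (y * y)) by (apply Rmult_le_pos; [|apply Rle_0_sqr]; auto).
  apply Rabs_le. lra.
Qed.

Lemma ef_energy_tends_to_0 M p sg (v dv : R -> R) : 1 < p -> sg * sg = 1 ->
  0 <= 2 / (p - 1) * (M - 2 - 2 / (p - 1)) ->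
  filterlim v (at_right 0) (locally (v 0)) -> filterlim dv (at_right 0) (locally 0) ->
  forall c, 0 < c -> exists X, forall x, x <= X ->
    Rabs (ef_energy p (2 / (p - 1)) (M - 2 - 2 / (p - 1)) (ef_Y p sg v) (ef_Z p sg dv) x) <= c.
Proof.
  intros Hp Hsg Hbe Hv Hdv c Hc.
  set (al := 2 / (p - 1)) in *. set (ga := M - 2 - al) in *.
  assert (Hal : 0 < al) by (unfold al; apply Rdiv_lt_0_compat; lra).
  set (Cn := (al + 1) * (al + 1) + al * ga + 1).
  assert (HCn : 0 < Cn) by (unfold Cn; assert (0 <= (al + 1) * (al + 1)) by apply Rle_0_sqr; lra).
  set (eta := Rmin 1 (sqrt (c / Cn))).
  assert (Hcn : 0 < c / Cn) by (apply Rdiv_lt_0_compat; auto).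
  assert (Heta : 0 < eta <= 1)
    by (split; [apply Rmin_pos; [lra|apply sqrt_lt_R0; auto]|apply Rmin_l]).
  assert (Heta2 : eta * eta <= c / Cn).
  { rewrite <- (sqrt_sqrt (c / Cn)) by lra.
    assert (eta <= sqrt (c / Cn)) by apply Rmin_r. apply Rmult_le_compat; lra. }
  destruct (ef_YZ_small_at_minus_infty p sg v dv Hp Hsg Hv Hdv eta ltac:(lra)) as [X HX].
  exists X. intros x Hx. destruct (HX x Hx) as [HYx HZx].
  apply Rle_trans with (Cn * (eta * eta)); [apply ef_energy_small; auto; lra|].
  apply (Rmult_le_compat_l Cn) in Heta2; [|lra].
  replace (Cn * (c / Cn)) with c in Heta2 by (field; lra). exact Heta2.
Qed.

Lemma ef_zone_of_radial M p sg (v dv : R -> R) lo a s0 : 1 < p -> sg * sg = 1 ->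
  0 < a < 1 -> v a = 0 -> lo < exp s0 -> s0 < ln a ->
  (forall t, 0 < t < 1 -> is_derive v t (dv t)) ->
  (forall t, 0 < t < 1 -> is_derive (fun s => Rpower s (M - 1) * dv s) t
                                    (- (Rpower t (M - 1) * spow p (v t)))) ->
  (forall x, lo < x < a -> 0 < sg * v x) ->
  (forall r, exp s0 <= r <= a -> sg * dv r <= 0) -> sg * dv a < 0 ->
  let Y := ef_Y p sg v in let Z := ef_Z p sg dv in
  ef_system p (2 / (p - 1)) (M - 2 - 2 / (p - 1)) Y Z s0 (ln a) /\
  (forall s, s0 <= s < ln a -> 0 < Y s) /\
  (forall s, s0 <= s <= ln a -> 0 <= Z s) /\ 0 < Z (ln a).
Proof.
  intros Hp Hsg Ha Hva Hlo Hs01 Hv Hdv Hpos Hflux Hflux_a Y Z.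
  assert (Hs1 : ln a < 0) by (rewrite <- ln_1; apply ln_increasing; lra).
  assert (Hexp : forall s, s0 <= s <= ln a -> exp s0 <= exp s <= a)
    by (intros s Hs; split; [apply exp_le; lra|rewrite <- (exp_ln a) by lra; apply exp_le; lra]).
  split; [apply ef_system_of_radial; auto|]. split; [|split].
  - intros s Hs. unfold Y, ef_Y.
    replace (sg * (exp (2 / (p - 1) * s) * v (exp s)))
      with (exp (2 / (p - 1) * s) * (sg * v (exp s))) by ring.
    apply Rmult_lt_0_compat; [apply exp_pos|]. apply Hpos. split.
    + apply Rlt_le_trans with (exp s0); [auto|apply exp_le; lra].
    + rewrite <- (exp_ln a) by lra. apply exp_increasing. lra.
  - intros s Hs. unfold Z, ef_Z.
    replace (- sg * (exp ((2 / (p - 1) + 1) * s) * dv (exp s)))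
      with (exp ((2 / (p - 1) + 1) * s) * - (sg * dv (exp s))) by ring.
    apply Rmult_le_pos; [left; apply exp_pos|].
    assert (sg * dv (exp s) <= 0); [apply Hflux, Hexp; lra|lra].
  - unfold Z, ef_Z. rewrite exp_ln by lra.
    replace (- sg * (exp ((2 / (p - 1) + 1) * ln a) * dv a))
      with (exp ((2 / (p - 1) + 1) * ln a) * - (sg * dv a)) by ring.
    apply Rmult_lt_0_compat; [apply exp_pos|lra].
Qed.

Section Constants.
Variables (M delta eps : R).
Hypothesis HM : 2 < M.
Hypothesis Hdelta : 0 < delta < 1.
Hypothesis Heps : 0 < eps.

(* Uniform constants for [p_lo <= p <= pM M], where [al = 2/(p-1)] lies in [[(M-2)/2, al_hi]]
   and [al ga >= be_lo]: [ell] is the log-width of the window [[1 - delta, 1]], [H_thr] the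
   final energy keeping [w] below [eps] there, [ka_thr] the admissible size of [al - ga], and
   [L_thr] the zone log-length that forces the initial energy below [H_thr / 8]. *)
Definition p_lo : R := 1 + 8 / (3 * (M - 2)).
Definition al_hi : R := 3 * (M - 2) / 4.
Definition be_lo : R := (M - 2) * (M - 2) / 8.
Definition rot_lo : R := sqrt be_lo * ((p_lo - 1) / (pM M + 1)).
Definition y_hi : R := Rpower ((pM M + 1) * (al_hi * al_hi) / 2 + 1) (1 / (p_lo - 1)).
Definition B_hi : R :=
  Rpower ((pM M + 1) * (1 + al_hi * al_hi / 2 + al_hi * al_hi) + 1) (1 / (p_lo - 1)).
Definition ell : R := - ln (1 - delta).
Definition growth : R := exp (2 * al_hi * ell).
Definition H_thr : R := Rmin 1 (be_lo * ((eps / growth) * (eps / growth)) / 4).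
Definition ka_thr : R :=
  Rmin (Rmin (1 / 2) rot_lo) (H_thr / (4 * ((2 * al_hi + 1 + al_hi * al_hi) * (B_hi * B_hi)))).
Definition L_thr : R := 2 * y_hi / sqrt (H_thr / 4) + 2 * PI / rot_lo + ell.

Lemma pM_sub_1 : pM M - 1 = 4 / (M - 2).
Proof. unfold pM. field. lra. Qed.

Lemma p_lo_bounds : 1 < p_lo < pM M.
Proof.
  unfold p_lo. rewrite <- (Rplus_0_r (pM M)), <- (Rplus_minus 1 (pM M)), pM_sub_1.
  assert (0 < 8 / (3 * (M - 2))) by (apply Rdiv_lt_0_compat; lra).
  assert (8 / (3 * (M - 2)) < 4 / (M - 2))
    by (apply (Rmult_lt_reg_r (3 * (M - 2))); [lra|]; field_simplify; lra).
  lra.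
Qed.

Lemma be_lo_pos : 0 < be_lo.
Proof. unfold be_lo. assert (0 < (M - 2) * (M - 2)) by nra. lra. Qed.

Lemma al_hi_pos : 0 < al_hi.
Proof. unfold al_hi. lra. Qed.

Lemma rot_lo_pos : 0 < rot_lo.
Proof.
  assert (H := p_lo_bounds). unfold rot_lo.
  apply Rmult_lt_0_compat; [apply sqrt_lt_R0, be_lo_pos|apply Rdiv_lt_0_compat; lra].
Qed.

Lemma exponent_bounds p : p_lo <= p <= pM M ->
  let al := 2 / (p - 1) in let ga := M - 2 - al in
  1 < p /\ 0 < ga /\ ga <= al /\ al <= al_hi /\ be_lo <= al * ga <= al_hi * al_hi.
Proof.
  intros [H1 H2] al ga. assert (Hlo := p_lo_bounds). assert (E := pM_sub_1).
  assert (Hp : 1 < p) by lra.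
  assert (Hal_lo : (M - 2) / 2 <= al).
  { unfold al. apply (Rmult_le_reg_r (p - 1)); [lra|].
    replace (2 / (p - 1) * (p - 1)) with 2 by (field; lra).
    apply Rle_trans with ((M - 2) / 2 * (4 / (M - 2))); [|replace ((M - 2) / 2 * (4 / (M - 2))) with 2 by (field; lra); lra].
    apply Rmult_le_compat_l; lra. }
  assert (Hal_hi : al <= al_hi).
  { unfold al, al_hi. apply (Rmult_le_reg_r (p - 1)); [lra|].
    replace (2 / (p - 1) * (p - 1)) with 2 by (field; lra).
    apply Rle_trans with (3 * (M - 2) / 4 * (8 / (3 * (M - 2))));
      [replace (3 * (M - 2) / 4 * (8 / (3 * (M - 2)))) with 2 by (field; lra); lra|].
    apply Rmult_le_compat_l; unfold p_lo in H1; lra. }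
  assert (Hga : (M - 2) / 4 <= ga) by (unfold ga, al_hi in *; lra).
  split; [auto|]. split; [lra|]. split; [unfold ga; lra|]. split; [auto|]. split.
  - unfold be_lo. replace ((M - 2) * (M - 2) / 8) with ((M - 2) / 2 * ((M - 2) / 4)) by field.
    apply Rmult_le_compat; lra.
  - apply Rmult_le_compat; unfold ga, al_hi in *; lra.
Qed.

Lemma ell_pos : 0 < ell.
Proof.
  unfold ell. assert (ln (1 - delta) < 0) by (rewrite <- ln_1; apply ln_increasing; lra). lra.
Qed.

Lemma growth_pos : 0 < growth.
Proof. apply exp_pos. Qed.

Lemma H_thr_bounds : 0 < H_thr <= 1.
Proof.
  assert (Hb := be_lo_pos). assert (Hg := growth_pos).
  split; [|apply Rmin_l]. apply Rmin_pos; [lra|].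
  assert (0 < eps / growth) by (apply Rdiv_lt_0_compat; auto).
  apply Rdiv_lt_0_compat; [apply Rmult_lt_0_compat; [|apply Rmult_lt_0_compat]|]; lra.
Qed.

Lemma B_hi_ge_1 : 1 <= B_hi.
Proof.
  assert (Hlo := p_lo_bounds). assert (E := pM_sub_1).
  assert (0 < 4 / (M - 2)) by (apply Rdiv_lt_0_compat; lra).
  apply Rpower_ge_1; [|left; apply Rdiv_lt_0_compat; lra].
  assert (0 <= (pM M + 1) * (1 + al_hi * al_hi / 2 + al_hi * al_hi))
    by (apply Rmult_le_pos; [|assert (0 <= al_hi * al_hi) by apply Rle_0_sqr]; lra).
  lra.
Qed.

Lemma ka_thr_pos : 0 < ka_thr.
Proof.
  assert (Hh := H_thr_bounds). assert (HB := B_hi_ge_1). assert (Ha := al_hi_pos).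
  unfold ka_thr. apply Rmin_pos; [apply Rmin_pos; [lra|apply rot_lo_pos]|].
  apply Rdiv_lt_0_compat; [lra|].
  assert (0 < al_hi * al_hi) by nra. assert (1 <= B_hi * B_hi) by nra.
  assert (0 < (2 * al_hi + 1 + al_hi * al_hi) * (B_hi * B_hi)) by nra. lra.
Qed.

(* The level [y1 = dd^(2/(p-1))] below which the potential is dominated by the quadratic
   part of the energy, and the rotation speed [dd (p-1)/(p+1)] above it. *)
Lemma level_bounds p : p_lo <= p <= pM M ->
  let al := 2 / (p - 1) in let ga := M - 2 - al in
  exists dd y1, 0 < dd /\ dd * dd = (p + 1) * (al * ga) / 2 /\
    0 < y1 /\ Rpower y1 (p - 1) = dd * dd /\ y1 <= y_hi /\
    rot_lo <= dd * ((p - 1) / (p + 1)).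
Proof.
  intros Hp al ga.
  assert (Hb := exponent_bounds p Hp). cbv zeta in Hb. fold al in Hb. fold ga in Hb.
  destruct Hb as [Hp1 [Hga [Hgal [Hal [Hbe1 Hbe2]]]]].
  assert (Hlo := p_lo_bounds). assert (Hbl := be_lo_pos).
  assert (HX : 0 < (p + 1) * (al * ga) / 2) by (apply Rdiv_lt_0_compat; [nra|lra]).
  set (dd := sqrt ((p + 1) * (al * ga) / 2)).
  assert (Hdd : dd * dd = (p + 1) * (al * ga) / 2) by (apply sqrt_sqrt; lra).
  exists dd, (Rpower (dd * dd) (1 / (p - 1))).
  split; [apply sqrt_lt_R0; auto|]. split; [auto|]. split; [apply Rpower_pos|]. split.
  { rewrite Rpower_mult. replace (1 / (p - 1) * (p - 1)) with 1 by (field; lra).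
    apply Rpower_1. lra. }
  split.
  - unfold y_hi. set (X := (pM M + 1) * (al_hi * al_hi) / 2 + 1).
    assert (HX1 : 1 <= X)
      by (unfold X; assert (0 <= (pM M + 1) * (al_hi * al_hi)) by (apply Rmult_le_pos; [lra|apply Rle_0_sqr]); lra).
    assert (Hddx : dd * dd <= X).
    { rewrite Hdd. unfold X.
      assert ((p + 1) * (al * ga) <= (pM M + 1) * (al_hi * al_hi)) by (apply Rmult_le_compat; nra).
      lra. }
    apply Rle_trans with (Rpower X (1 / (p - 1))).
    + apply Rle_Rpower_l; [left; apply Rdiv_lt_0_compat; lra|split; lra].
    + apply Rle_Rpower; [auto|]. apply Rmult_le_compat_l; [lra|]. apply Rinv_le_contravar; lra.
  - unfold rot_lo. apply Rmult_le_compat.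
    + apply sqrt_pos.
    + left. apply Rdiv_lt_0_compat; lra.
    + apply sqrt_le_1_alt. nra.
    + unfold Rdiv. apply Rmult_le_compat; [lra|left; apply Rinv_0_lt_compat; lra|lra|].
      apply Rinv_le_contravar; lra.
Qed.

Lemma peak_level_bound p : p_lo <= p <= pM M ->
  let al := 2 / (p - 1) in let ga := M - 2 - al in
  (p + 1) * (1 + al * ga / 2 + (al - ga) * al) < Rpower B_hi (p - 1).
Proof.
  intros Hp al ga.
  assert (Hb := exponent_bounds p Hp). cbv zeta in Hb. fold al in Hb. fold ga in Hb.
  destruct Hb as [Hp1 [Hga [Hgal [Hal [Hbe1 Hbe2]]]]].
  assert (Hlo := p_lo_bounds). assert (HB := B_hi_ge_1).
  set (X := (pM M + 1) * (1 + al_hi * al_hi / 2 + al_hi * al_hi) + 1).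
  assert (HX0 : 0 <= (pM M + 1) * (1 + al_hi * al_hi / 2 + al_hi * al_hi))
    by (apply Rmult_le_pos; [|assert (0 <= al_hi * al_hi) by apply Rle_0_sqr]; lra).
  assert (EX : Rpower B_hi (p_lo - 1) = X).
  { unfold B_hi. fold X. rewrite Rpower_mult.
    replace (1 / (p_lo - 1) * (p_lo - 1)) with 1 by (field; lra). apply Rpower_1. unfold X. lra. }
  assert (Rpower B_hi (p_lo - 1) <= Rpower B_hi (p - 1)) by (apply Rle_Rpower; lra).
  assert ((al - ga) * al <= al_hi * al_hi)
    by (apply Rle_trans with (al * al); [apply Rmult_le_compat_r|apply Rmult_le_compat]; lra).
  assert ((p + 1) * (1 + al * ga / 2 + (al - ga) * al)
          <= (pM M + 1) * (1 + al_hi * al_hi / 2 + al_hi * al_hi)).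
  { apply Rmult_le_compat; [lra| |lra|lra]. assert (0 <= al * ga) by nra. nra. }
  unfold X in EX. lra.
Qed.

Lemma ell_le_L_thr : ell <= L_thr.
Proof.
  assert (Hh := H_thr_bounds). assert (Hrot := rot_lo_pos). assert (0 < PI) by apply PI_RGT_0.
  assert (0 < 2 * y_hi / sqrt (H_thr / 4))
    by (apply Rdiv_lt_0_compat; [apply Rmult_lt_0_compat; [lra|apply Rpower_pos]|
                                 apply sqrt_lt_R0; lra]).
  assert (0 < 2 * PI / rot_lo) by (apply Rdiv_lt_0_compat; lra).
  unfold L_thr. lra.
Qed.

Lemma final_energy_small p (Y Z : R -> R) s0 s1 : p_lo <= p <= pM M ->
  let al := 2 / (p - 1) in let ga := M - 2 - al in
  al - ga <= ka_thr -> ef_system p al ga Y Z s0 s1 -> s0 < s1 ->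
  (forall s, s0 <= s < s1 -> 0 < Y s) -> Y s1 = 0 -> 0 < Z s1 ->
  (forall s, s0 <= s <= s1 -> 0 <= Z s) ->
  0 <= ef_energy p al ga Y Z s0 <= H_thr / 8 -> ef_energy p al ga Y Z s1 <= H_thr / 2.
Proof.
  intros Hp al ga Hka HS Hs01 HYpos HY1 HZ1 HZnn HE0.
  assert (Hb := exponent_bounds p Hp). cbv zeta in Hb. fold al in Hb. fold ga in Hb.
  destruct Hb as [Hp1 [Hga [Hgal [Hal [Hbe1 Hbe2]]]]].
  assert (Hh := H_thr_bounds). assert (HB := B_hi_ge_1). assert (Hah := al_hi_pos).
  assert (Hka_half : al - ga <= 1 / 2)
    by (eapply Rle_trans; [exact Hka|]; eapply Rle_trans; [apply Rmin_l|apply Rmin_l]).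
  set (CC := (2 * al_hi + 1 + al_hi * al_hi) * (B_hi * B_hi)).
  assert (HCC : 0 < CC) by (unfold CC; assert (0 < al_hi * al_hi) by nra; nra).
  assert (Hka_CC : (al - ga) * CC <= H_thr / 4).
  { assert (Hk : al - ga <= H_thr / (4 * CC)) by (eapply Rle_trans; [exact Hka|]; apply Rmin_r).
    apply (Rmult_le_compat_r CC) in Hk; [|lra].
    replace (H_thr / (4 * CC) * CC) with (H_thr / 4) in Hk by (field; lra). exact Hk. }
  assert (Hfin := ef_final_energy_bound p al ga Y Z s0 s1 Hp1 Hga Hgal HS Hs01 HYpos HY1 HZ1 HZnn
    B_hi ltac:(lra) Hka_half HB (peak_level_bound p Hp)).
  assert ((al - ga) * (2 * al + 1 + al * ga) * (B_hi * B_hi) <= (al - ga) * CC).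
  { unfold CC. rewrite Rmult_assoc. apply Rmult_le_compat_l; [lra|].
    apply Rmult_le_compat_r; [apply Rle_0_sqr|lra]. }
  lra.
Qed.

Lemma rescaled_eq_ef_Y p sg (v : R -> R) a r : sg * sg = 1 -> 0 < a -> 0 < r ->
  Rpower a (2 / (p - 1)) * v (a * r) = sg * ef_Y p sg v (ln a + ln r) / Rpower r (2 / (p - 1)).
Proof.
  intros Hsg Ha Hr. unfold ef_Y. rewrite exp_plus, !exp_ln by auto.
  assert (0 < Rpower r (2 / (p - 1))) by apply Rpower_pos.
  unfold Rpower. rewrite Rmult_plus_distr_l, exp_plus.
  replace (sg * (sg * (exp (2 / (p - 1) * ln a) * exp (2 / (p - 1) * ln r) * v (a * r))))
    with ((sg * sg) * (exp (2 / (p - 1) * ln a) * v (a * r)) * exp (2 / (p - 1) * ln r)) by ring.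
  rewrite Hsg. field. apply Rgt_not_eq, exp_pos.
Qed.

Lemma energy_threshold_scale : sqrt (H_thr / be_lo) * growth <= eps / 2.
Proof.
  assert (Hb := be_lo_pos). assert (Hg := growth_pos). assert (Hh := H_thr_bounds).
  assert (Hc : sqrt (H_thr / be_lo) <= eps / growth / 2).
  { rewrite <- (sqrt_square (eps / growth / 2))
      by (left; apply Rdiv_lt_0_compat; [apply Rdiv_lt_0_compat|]; lra).
    apply sqrt_le_1_alt.
    assert (H_thr <= be_lo * ((eps / growth) * (eps / growth)) / 4) by apply Rmin_r.
    apply (Rmult_le_reg_r be_lo); [auto|].
    replace (H_thr / be_lo * be_lo) with H_thr by (field; lra).
    replace (eps / growth / 2 * (eps / growth / 2) * be_lo)
      with (be_lo * ((eps / growth) * (eps / growth)) / 4) by (field; lra). auto. }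
  apply (Rmult_le_compat_r growth) in Hc; [|lra].
  replace (eps / growth / 2 * growth) with (eps / 2) in Hc by (field; lra). exact Hc.
Qed.

Lemma window_bounds al r : 0 <= al <= al_hi -> 1 - delta <= r <= 1 ->
  - ell <= ln r <= 0 /\ / Rpower r al <= exp (al_hi * ell).
Proof.
  intros Hal Hr.
  assert (Hlnr : - ell <= ln r <= 0).
  { split; [unfold ell; rewrite Ropp_involutive; apply ln_le; lra|].
    rewrite <- ln_1. apply ln_le; lra. }
  split; [auto|]. unfold Rpower. rewrite <- exp_Ropp. apply exp_le.
  assert (0 <= (al_hi - al) * (- ln r)) by (apply Rmult_le_pos; lra).
  assert (al_hi * (- ln r) <= al_hi * ell) by (apply Rmult_le_compat_l; lra).
  lra.
Qed.

(* Gronwall backwards from [s1 = ln a] over the window [ln (1 - delta) <= ln r <= 0]. *)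
Lemma rescaled_small_of_zone p sg (v dv : R -> R) a s0 : p_lo <= p <= pM M ->
  let al := 2 / (p - 1) in let ga := M - 2 - al in
  let Y := ef_Y p sg v in let Z := ef_Z p sg dv in
  al - ga <= ka_thr -> sg * sg = 1 -> 0 < a < 1 -> s0 <= ln a - ell ->
  ef_system p al ga Y Z s0 (ln a) -> (forall s, s0 <= s < ln a -> 0 < Y s) -> v a = 0 ->
  0 < Z (ln a) -> (forall s, s0 <= s <= ln a -> 0 <= Z s) ->
  0 <= ef_energy p al ga Y Z s0 <= H_thr / 8 ->
  forall r, 1 - delta <= r <= 1 -> Rabs (Rpower a al * v (a * r)) < eps.
Proof.
  intros Hp al ga Y Z Hka Hsg Ha Hs0 HS HYpos Hva HZ1 HZnn HE0 r Hr.
  assert (Hb := exponent_bounds p Hp). cbv zeta in Hb. fold al in Hb. fold ga in Hb.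
  destruct Hb as [Hp1 [Hga [Hgal [Hal [Hbe1 Hbe2]]]]].
  assert (Hell := ell_pos). assert (Hbl := be_lo_pos). assert (Hscale := energy_threshold_scale).
  set (s1 := ln a) in *.
  assert (Hs01 : s0 < s1) by lra.
  assert (HY1 : Y s1 = 0) by (unfold Y, ef_Y, s1; rewrite exp_ln, Hva by lra; ring).
  assert (Hh := final_energy_small p Y Z s0 s1 Hp Hka HS Hs01 HYpos HY1 HZ1 HZnn HE0).
  fold al ga in Hh.
  set (h := ef_energy p al ga Y Z s1) in *.
  destruct (window_bounds al r ltac:(lra) Hr) as [Hlnr Hinv].
  set (x := s1 + ln r).
  assert (Hx : s0 <= x <= s1) by (unfold x; lra).
  assert (HYx : 0 <= Y x) by (apply (ef_Y_nonneg Y s0 s1); auto).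
  assert (Hrp : 0 < Rpower r al) by apply Rpower_pos.
  assert (E := rescaled_eq_ef_Y p sg v a r Hsg ltac:(lra) ltac:(lra)).
  fold al s1 x in E. rewrite E.
  replace (Rabs (sg * ef_Y p sg v x / Rpower r al)) with (Y x * / Rpower r al).
  2: { unfold Rdiv. rewrite !Rabs_mult, sign_abs, Rmult_1_l by auto.
       rewrite (Rabs_right (ef_Y p sg v x)) by (apply Rle_ge; exact HYx).
       rewrite Rabs_right by (left; apply Rinv_0_lt_compat; auto). reflexivity. }
  set (c0 := sqrt (2 * h / (al * ga))).
  assert (Hc0 : c0 <= sqrt (H_thr / be_lo)).
  { apply sqrt_le_1_alt. apply Rle_trans with (H_thr / (al * ga)).
    - unfold Rdiv. apply Rmult_le_compat_r; [left; apply Rinv_0_lt_compat; nra|lra].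
    - unfold Rdiv. apply Rmult_le_compat_l; [lra|]. apply Rinv_le_contravar; lra. }
  assert (HYx2 : Y x <= c0 * exp (al_hi * ell)).
  { eapply Rle_trans; [apply (ef_Y_growth_bound p al ga Y Z s0 s1); auto; lra|].
    apply Rmult_le_compat_l; [apply sqrt_pos|].
    assert (sqrt (al * ga) <= al_hi)
      by (rewrite <- (sqrt_square al_hi) by (left; apply al_hi_pos); apply sqrt_le_1_alt; lra).
    assert (exp (sqrt (al * ga) * (s1 - x)) <= exp (al_hi * ell)); [|lra].
    apply exp_le. unfold x. apply Rmult_le_compat; [apply sqrt_pos|lra|auto|lra]. }
  assert (Y x * / Rpower r al <= c0 * exp (al_hi * ell) * exp (al_hi * ell))
    by (apply Rmult_le_compat; [lra|left; apply Rinv_0_lt_compat; lra|auto|auto]).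
  assert (c0 * growth <= sqrt (H_thr / be_lo) * growth)
    by (apply Rmult_le_compat_r; [apply Rlt_le, growth_pos|auto]).
  unfold growth in *. replace (2 * al_hi * ell) with (al_hi * ell + al_hi * ell) in * by ring.
  rewrite exp_plus in *. lra.
Qed.

(* The log-length of the zone bounds [1 / sqrt (2 H(s0))] from below ([ef_zone_length]). *)
Lemma energy_small_of_long_zone p (Y Z : R -> R) s0 s1 : p_lo <= p <= pM M ->
  let al := 2 / (p - 1) in let ga := M - 2 - al in
  al - ga <= ka_thr -> ef_system p al ga Y Z s0 s1 -> s0 < s1 ->
  (forall s, s0 <= s < s1 -> 0 < Y s) -> Y s1 = 0 -> 0 < Z s1 -> Z s0 = 0 ->
  L_thr <= s1 - s0 -> ef_energy p al ga Y Z s0 <= H_thr / 8.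
Proof.
  intros Hp al ga Hka HS Hs01 HYpos HY1 HZ1 HZ0 Hlong.
  assert (Hb := exponent_bounds p Hp). cbv zeta in Hb. fold al in Hb. fold ga in Hb.
  destruct Hb as [Hp1 [Hga [Hgal [Hal [Hbe1 Hbe2]]]]].
  assert (Hh := H_thr_bounds). assert (Hrot := rot_lo_pos).
  destruct (Rle_or_lt (ef_energy p al ga Y Z s0) (H_thr / 8)) as [|Hbig]; [auto|exfalso].
  destruct (level_bounds p Hp) as [dd [y1 [Hdd [Hdd2 [Hy1 [Hy1p [Hy1hi Hrotdd]]]]]]].
  fold al ga in Hdd2.
  assert (Hka' : al - ga <= dd * ((p - 1) / (p + 1))).
  { apply Rle_trans with ka_thr; [lra|].
    eapply Rle_trans; [apply Rmin_l|]. eapply Rle_trans; [apply Rmin_r|auto]. }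
  assert (Hlen := ef_zone_length p al ga Y Z s0 s1 Hp1 Hga Hgal HS Hs01 HYpos HY1 HZ1
    y1 dd HZ0 Hy1 Hdd Hdd2 Hy1p Hka').
  assert (Hq : sqrt (H_thr / 4) < sqrt (2 * ef_energy p al ga Y Z s0))
    by (apply sqrt_lt_1_alt; lra).
  assert (0 < sqrt (H_thr / 4)) by (apply sqrt_lt_R0; lra).
  assert (2 * y1 / sqrt (2 * ef_energy p al ga Y Z s0) <= 2 * y_hi / sqrt (H_thr / 4)).
  { unfold Rdiv. apply Rmult_le_compat; [lra|left; apply Rinv_0_lt_compat; lra|lra|].
    apply Rinv_le_contravar; lra. }
  assert (2 * PI / (dd * ((p - 1) / (p + 1))) <= 2 * PI / rot_lo).
  { unfold Rdiv. apply Rmult_le_compat_l; [assert (0 < PI) by apply PI_RGT_0; lra|].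
    apply Rinv_le_contravar; lra. }
  unfold L_thr in Hlong. assert (Hell := ell_pos). lra.
Qed.

Lemma zone_estimate_center p sg (v dv : R -> R) a : p_lo <= p <= pM M ->
  2 / (p - 1) - (M - 2 - 2 / (p - 1)) <= ka_thr -> sg * sg = 1 -> 0 < a < 1 -> v a = 0 ->
  (forall t, 0 < t < 1 -> is_derive v t (dv t)) ->
  (forall t, 0 < t < 1 -> is_derive (fun s => Rpower s (M - 1) * dv s) t
                                    (- (Rpower t (M - 1) * spow p (v t)))) ->
  filterlim dv (at_right 0) (locally 0) -> filterlim v (at_right 0) (locally (v 0)) ->
  (forall x, 0 < x < a -> 0 < sg * v x) ->
  forall r, 1 - delta <= r <= 1 -> Rabs (Rpower a (2 / (p - 1)) * v (a * r)) < eps.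
Proof.
  intros Hp Hka Hsg Ha Hva Hv Hdv Hdv0 Hv0 Hpos.
  assert (Hb := exponent_bounds p Hp). cbv zeta in Hb.
  destruct Hb as [Hp1 [Hga [Hgal [Hal [Hbe1 Hbe2]]]]].
  set (al := 2 / (p - 1)) in *. set (ga := M - 2 - al) in *.
  set (En := ef_energy p al ga (ef_Y p sg v) (ef_Z p sg dv)).
  assert (Hell := ell_pos). assert (Hh := H_thr_bounds).
  assert (Hflux : forall r, 0 < r <= a -> sg * dv r < 0)
    by (apply (radial_dv_sign_from_center M p sg 0 a v dv); auto; lra).
  assert (Hzone : forall s0, s0 < ln a ->
    ef_system p al ga (ef_Y p sg v) (ef_Z p sg dv) s0 (ln a) /\
    (forall s, s0 <= s < ln a -> 0 < ef_Y p sg v s) /\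
    (forall s, s0 <= s <= ln a -> 0 <= ef_Z p sg dv s) /\ 0 < ef_Z p sg dv (ln a)).
  { intros s0 Hs0. assert (0 < exp s0) by apply exp_pos.
    apply (ef_zone_of_radial M p sg v dv 0 a s0); auto.
    - intros r Hr. left. apply Hflux. lra.
    - apply Hflux. lra. }
  assert (Hmono : forall x y, x <= y -> y <= ln a - ell -> En x <= En y).
  { intros x y Hxy Hy. destruct (Hzone x ltac:(lra)) as [HS _].
    apply (ef_energy_mono p al ga _ _ x (ln a)); auto; lra. }
  assert (Hbe0 : 0 <= al * ga) by (assert (Hbl := be_lo_pos); lra).
  assert (Hvanish := ef_energy_tends_to_0 M p sg v dv Hp1 Hsg Hbe0 Hv0 Hdv0).
  destruct (Hvanish (H_thr / 8) ltac:(lra)) as [X HX].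
  set (s0 := Rmin X (ln a - ell)).
  assert (s0 <= X /\ s0 <= ln a - ell) as [Hs0X Hs0a] by (split; [apply Rmin_l|apply Rmin_r]).
  destruct (Hzone s0 ltac:(lra)) as [HS [HYpos [HZnn HZ1]]].
  apply (rescaled_small_of_zone p sg v dv a s0 Hp); auto.
  split.
  - apply (nonneg_of_mono_vanishing En (ln a - ell) Hmono Hvanish). lra.
  - apply Rabs_le_between, HX. lra.
Qed.

Lemma zone_estimate_inner p sg (v dv : R -> R) lo sig a : p_lo <= p <= pM M ->
  2 / (p - 1) - (M - 2 - 2 / (p - 1)) <= ka_thr -> sg * sg = 1 -> 0 <= lo -> lo < sig < a ->
  a < 1 -> v a = 0 -> dv sig = 0 -> sig / a <= exp (- L_thr) ->
  (forall t, 0 < t < 1 -> is_derive v t (dv t)) ->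
  (forall t, 0 < t < 1 -> is_derive (fun s => Rpower s (M - 1) * dv s) t
                                    (- (Rpower t (M - 1) * spow p (v t)))) ->
  (forall x, lo < x < a -> 0 < sg * v x) ->
  forall r, 1 - delta <= r <= 1 -> Rabs (Rpower a (2 / (p - 1)) * v (a * r)) < eps.
Proof.
  intros Hp Hka Hsg Hlo Hsig Ha1 Hva Hdsig Hratio Hv Hdv Hpos.
  assert (Hb := exponent_bounds p Hp). cbv zeta in Hb.
  destruct Hb as [Hp1 [Hga [Hgal [Hal [Hbe1 Hbe2]]]]].
  set (al := 2 / (p - 1)) in *. set (ga := M - 2 - al) in *.
  assert (Hell := ell_pos).
  assert (Hflux : forall r, sig < r <= a -> sg * dv r < 0)
    by (apply (radial_dv_sign_after_crit M p sg lo a v dv); auto; lra).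
  set (s0 := ln sig). set (s1 := ln a).
  assert (Hexp0 : exp s0 = sig) by (apply exp_ln; lra).
  assert (Hlong : L_thr <= s1 - s0).
  { assert (Hq : 0 < sig / a) by (apply Rdiv_lt_0_compat; lra).
    assert (Hln : ln (sig / a) <= - L_thr)
      by (rewrite <- (ln_exp (- L_thr)); apply ln_le; auto).
    rewrite ln_div in Hln by lra. unfold s0, s1. lra. }
  assert (HLell := ell_le_L_thr).
  destruct (ef_zone_of_radial M p sg v dv lo a s0 Hp1 Hsg ltac:(lra) Hva ltac:(lra) ltac:(fold s1; lra)
    Hv Hdv Hpos) as [HS [HYpos [HZnn HZ1]]].
  { intros r Hr. destruct (Req_dec r sig) as [->|]; [rewrite Hdsig; lra|].
    left. apply Hflux. lra. }
  { apply Hflux. lra. }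
  fold al ga s1 in HS, HYpos, HZnn, HZ1.
  assert (HZ0 : ef_Z p sg dv s0 = 0) by (unfold ef_Z; rewrite Hexp0, Hdsig; ring).
  assert (HY1 : ef_Y p sg v s1 = 0) by (unfold ef_Y, s1; rewrite exp_ln, Hva by lra; ring).
  assert (HE0 : 0 < ef_energy p al ga (ef_Y p sg v) (ef_Z p sg dv) s0)
    by (apply ef_energy_pos_of_Z_zero; auto; apply HYpos; lra).
  apply (rescaled_small_of_zone p sg v dv a s0 Hp); auto; fold al ga s1; try lra.
  split; [lra|].
  apply (energy_small_of_long_zone p _ _ s0 s1 Hp); auto; lra.
Qed.

End Constants.

Lemma rescaled_solution_small M delta eps m i p v (t s : nat -> R) :
  2 < M -> 0 < delta < 1 -> 0 < eps -> (1 <= i <= m - 1)%nat ->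
  p_lo M <= p <= pM M -> 2 / (p - 1) - (M - 2 - 2 / (p - 1)) <= ka_thr M delta eps ->
  radial_sol M p v -> nodal_zeros m v t -> crit_points m v t s ->
  (i = 1%nat \/ s (i - 1)%nat / t i <= exp (- L_thr M delta eps)) ->
  forall r, 1 - delta <= r <= 1 -> Rabs (Rpower (t i) (2 / (p - 1)) * v (t i * r)) < eps.
Proof.
  intros HM Hdelta Heps Hi Hp Hka [dv [Hv [Hdv [Hdv0 [Hv0 [_ _]]]]]] Hnod [_ Hcrit] Hcase.
  destruct (nodal_zone m i v t Hi Hnod) as [[Hlo Hla] [Ha1 [Hva Hnz]]].
  destruct (continuous_nonzero_sign v (t (i - 1)%nat) (t i)) as [sg [Hsg Hpos]]; auto.
  { intros x Hx. apply (is_derive_continuity_pt v x (dv x)), Hv. lra. }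
  destruct (Nat.eq_dec i 1) as [->|Hi1].
  - assert (Ht0 : t (1 - 1)%nat = 0) by apply Hnod.
    rewrite Ht0 in Hpos.
    apply (zone_estimate_center M delta eps HM Hdelta Heps _ sg v dv); auto; lra.
  - destruct Hcase as [|Hratio]; [lia|].
    destruct (Hcrit (i - 1)%nat ltac:(lia) ltac:(lia)) as [[Hs1 Hs2] Hsd].
    replace (S (i - 1)) with i in Hs2 by lia.
    assert (Hdsig : dv (s (i - 1)%nat) = 0).
    { rewrite <- (is_derive_unique v _ 0 Hsd). symmetry. apply is_derive_unique, Hv. lra. }
    apply (zone_estimate_inner M delta eps HM Hdelta Heps _ sg v dv (t (i - 1)%nat) (s (i - 1)%nat)); auto; lra.
Qed.

Lemma kappa_small_near_pM M k : 2 < M -> 0 < k ->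
  1 + 4 / (M - 2 + k) < pM M /\
  forall p, 1 + 4 / (M - 2 + k) <= p -> 2 / (p - 1) - (M - 2 - 2 / (p - 1)) <= k.
Proof.
  intros HM Hk. split.
  - rewrite <- (Rplus_minus 1 (pM M)), (pM_sub_1 M HM).
    apply Rplus_lt_compat_l. unfold Rdiv. apply Rmult_lt_compat_l; [lra|].
    apply Rinv_lt_contravar; nra.
  - intros p Hp.
    assert (Hp1 : 1 < p) by (assert (0 < 4 / (M - 2 + k)) by (apply Rdiv_lt_0_compat; lra); lra).
    replace (2 / (p - 1) - (M - 2 - 2 / (p - 1))) with (4 / (p - 1) - (M - 2)) by (field; lra).
    assert (4 / (p - 1) <= M - 2 + k); [|lra].
    apply (Rmult_le_reg_r (p - 1)); [lra|]. replace (4 / (p - 1) * (p - 1)) with 4 by (field; lra).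
    apply (Rmult_le_reg_l (/ (M - 2 + k))); [apply Rinv_0_lt_compat; lra|].
    rewrite <- Rmult_assoc, Rinv_l, Rmult_1_l by lra. unfold Rdiv in Hp. lra.
Qed.

Lemma is_lim_seq_eventually (u : nat -> R) (l e : R) : is_lim_seq u l -> 0 < e ->
  exists N, forall n, (N <= n)%nat -> Rabs (u n - l) < e.
Proof. intros H He. apply is_lim_seq_spec in H. exact (H (mkposreal e He)). Qed.

Theorem lemma2p10 (M : R) (m i : nat) (p : nat -> R) (v : nat -> R -> R)
  (t s : nat -> nat -> R) :
  2 < M ->
  (2 <= m)%nat ->
  (1 <= i)%nat -> (i <= m - 1)%nat ->
  (forall n, 1 < p n < pM M) ->
  is_lim_seq p (pM M) ->
  (forall n, radial_sol M (p n) (v n)) ->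
  (forall n, 0 < v n 0) ->
  (forall n, nodal_zeros m (v n) (t n)) ->
  (forall n, crit_points m (v n) (t n) (s n)) ->
  is_lim_seq (fun n => s n (i - 1)%nat / t n i) 0 ->
  is_lim_seq (fun n => t n i * Rpower (Rabs (v n (s n (i - 1)%nat))) ((p n - 1) / 2))
             p_infty ->
  forall delta, 0 < delta < 1 ->
    forall eps, 0 < eps ->
      exists N : nat, forall n, (N <= n)%nat ->
        forall r, 1 - delta <= r <= 1 ->
          Rabs (Rpower (t n i) (2 / (p n - 1)) * v n (t n i * r)) < eps.
Proof.
  intros HM Hm Hi1 Hi2 Hp Hplim Hrad _ Hnod Hcrit Hratio _ delta Hdelta eps Heps.
  destruct (kappa_small_near_pM M (ka_thr M delta eps) HM (ka_thr_pos M delta eps HM Hdelta Heps))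
    as [Hq Hkappa].
  set (q := Rmax (p_lo M) (1 + 4 / (M - 2 + ka_thr M delta eps))).
  assert (Hq_lt : q < pM M) by (apply Rmax_lub_lt; [apply p_lo_bounds|]; auto).
  destruct (is_lim_seq_eventually p (pM M) (pM M - q) Hplim ltac:(lra)) as [N1 HN1].
  destruct (is_lim_seq_eventually _ 0 (exp (- L_thr M delta eps)) Hratio (exp_pos _)) as [N2 HN2].
  exists (Nat.max N1 N2). intros n Hn.
  specialize (HN1 n ltac:(lia)). specialize (HN2 n ltac:(lia)). specialize (Hp n).
  apply Rabs_def2 in HN1. rewrite Rminus_0_r in HN2.
  assert (Hqn : q <= p n) by lra.
  apply (rescaled_solution_small M delta eps m i (p n) (v n) (t n) (s n)); auto; try lia.
  - split; [apply Rle_trans with q; [apply Rmax_l|]|]; lra.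
  - apply Hkappa. apply Rle_trans with q; [apply Rmax_r|lra].
  - destruct (Nat.eq_dec i 1) as [|Hi]; [left|right]; auto.
    apply Rlt_le, Rle_lt_trans with (1 := Rle_abs _), HN2.
Qed.
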